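(* The forgetful functor $U:\mathbf{Exp}\to\omega\mathbf{Cat}$ is monadic.
   Context: All $\omega$-categories are strict and globular; $\omega\mathbf{Cat}$ is the category of strict $\omega$-categories and strict $\omega$-functors. For an $n$-cell $x$ and $i\le n$, $s_i(x),t_i(x)$ are its iterated $i$-dimensional source and target ($s_n(x)=t_n(x)=x$, $s(x)=s_{n-1}(x)$, $t(x)=t_{n-1}(x)$). $y\star_p x$ is the $p$-composite (defined when $t_p(x)=s_p(y)$), $1_u$ the identity on $u$; lower-dimensional cells in composites stand for their iterated identities; composites are bracketed giving priority to the lowest-dimensional composition ($z\star_p y\star_q x=(z\star_p y)\star_q x$ if $p\le q$, $z\star_p(y\star_q x)$ if $p\ge q$). An expansion on an $\omega$-category $C$ consists of a $0$-cell $o$ (the origin) and, for each $n$-cell $x$ of $C$, an $(n+1)$-cell $\xi_x$ with $\xi_x:o\to x$ if $n=0$ and $\xi_x:\xi_{t(x)}\to x\star_0\xi_{s_0(x)}\star_1\cdots\star_{n-1}\xi_{s_{n-1}(x)}$ if $n>0$, such that for all $n>p$, all $n$-cells $x,y$ with $t_p(x)=s_p(y)$ and all cells $u$: $\xi_{y\star_p x}=t_{p+1}(y)\star_0\xi_{s_0(x)}\star_1\cdots\star_{p-1}\xi_{s_{p-1}(x)}\star_p\xi_x\star_{p+1}\xi_y$, $\xi_{1_u}=1_{\xi_u}$, $\xi_{\xi_u}=1_{\xi_u}$, and $\xi_o=1_o$. $\mathbf{Exp}$ is the category whose objects are $\omega$-categories with an expansion $(C,o,\xi)$ and whose morphisms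 are $\omega$-functors $f$ with $f(o)=o$ and $f(\xi_x)=\xi_{f(x)}$ for every cell $x$; $U$ forgets the expansion. *)

From Stdlib Require Import Arith PeanoNat List Lia.
From Stdlib Require Import ProofIrrelevance FunctionalExtensionality.

Set Implicit Arguments.
Unset Strict Implicit.

(* The cells of all dimensions are gathered in a single
   carrier type, each cell carrying its dimension [dim]; the n-cells are
   the cells of dimension n.  [src]/[tgt] are the (n-1)-dimensional source
   and target (on 0-cells they are fixed to the identity, a harmless
   normalisation of otherwise meaningless values), [idc u] is the identity
   (n+1)-cell on an n-cell u, and [comp p y x] is the p-composite
   y *_p x (only meaningful when x,y are composable, see below). *)
Record GlobData := {
  cell :> Type;
  dim : cell -> nat;
  src : cell -> cell;
  tgt : cell -> cell;
  idc : cell -> cell;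
  comp : nat -> cell -> cell -> cell }.

Arguments dim {g} _.
Arguments src {g} _.
Arguments tgt {g} _.
Arguments idc {g} _.
Arguments comp {g} _ _ _.

Section Derived.
Variable G : GlobData.

(* iterated i-dimensional source / target s_i(x), t_i(x)  (= x if i >= dim x) *)
Definition srcn (i : nat) (x : G) : G := Nat.iter (dim x - i) (@src G) x.
Definition tgtn (i : nat) (x : G) : G := Nat.iter (dim x - i) (@tgt G) x.

Definition idn (n : nat) (u : G) : G := Nat.iter (n - dim u) (@idc G) u.

Definition composable (p : nat) (x y : G) : Prop :=
  p < dim x /\ dim y = dim x /\ tgtn p x = srcn p y.

(* composite where lower-dimensional cells stand for their iterated identities *)
Definition pcomp (p : nat) (y x : G) : G :=
  let m := Nat.max (dim x) (dim y) in comp p (idn m y) (idn m x).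

Record is_omega_cat : Prop := {
  oc_dim_src : forall x : G, 0 < dim x -> dim (src x) = pred (dim x);
  oc_dim_tgt : forall x : G, 0 < dim x -> dim (tgt x) = pred (dim x);
  oc_st0 : forall x : G, dim x = 0 -> src x = x /\ tgt x = x;
  oc_dim_id : forall u : G, dim (idc u) = S (dim u);
  oc_dim_comp : forall p (x y : G), composable p x y -> dim (comp p y x) = dim x;
  oc_glob : forall x : G, 1 < dim x ->
      src (src x) = src (tgt x) /\ tgt (src x) = tgt (tgt x);
  oc_st_id : forall u : G, src (idc u) = u /\ tgt (idc u) = u;
  oc_st_comp_top : forall p (x y : G), composable p x y -> S p = dim x ->
      src (comp p y x) = src x /\ tgt (comp p y x) = tgt y;
  oc_st_comp_low : forall p (x y : G), composable p x y -> S p < dim x ->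
      src (comp p y x) = comp p (src y) (src x) /\
      tgt (comp p y x) = comp p (tgt y) (tgt x);
  oc_assoc : forall p (x y z : G), composable p x y -> composable p y z ->
      comp p (comp p z y) x = comp p z (comp p y x);
  oc_unit_l : forall p (x : G), p < dim x ->
      comp p (idn (dim x) (tgtn p x)) x = x;
  oc_unit_r : forall p (x : G), p < dim x ->
      comp p x (idn (dim x) (srcn p x)) = x;
  oc_id_comp : forall p (x y : G), composable p x y ->
      idc (comp p y x) = comp p (idc y) (idc x);
  oc_interchange : forall p q (x y x' y' : G), q < p ->
      composable p x y -> composable p x' y' ->
      composable q x x' -> composable q y y' ->
      comp q (comp p y' x') (comp p y x) = comp p (comp q y' y) (comp q x' x) }.

(* x *_0 xi_{s_0 x'} *_1 ... *_{k-1} xi_{s_{k-1} x'}  starting from [base],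
   bracketed to the left (lowest-dimensional composition first) *)
Definition chain (xi : G -> G) (base x : G) (k : nat) : G :=
  fold_left (fun acc i => pcomp i acc (xi (srcn i x))) (seq 0 k) base.

Record is_expansion (o : G) (xi : G -> G) : Prop := {
  ex_dim_o : dim o = 0;
  ex_dim : forall x : G, dim (xi x) = S (dim x);
  ex_st0 : forall x : G, dim x = 0 -> src (xi x) = o /\ tgt (xi x) = x;
  ex_stS : forall x : G, 0 < dim x ->
      src (xi x) = xi (tgt x) /\ tgt (xi x) = chain xi x x (dim x);
  ex_comp : forall p (x y : G), composable p x y ->
      xi (comp p y x) =
      pcomp (S p) (pcomp p (chain xi (tgtn (S p) y) x p) (xi x)) (xi y);
  ex_id : forall u : G, xi (idc u) = idc (xi u);
  ex_xi : forall u : G, xi (xi u) = idc (xi u);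
  ex_o : xi o = idc o }.

End Derived.

Record OmegaCat := { ocdata :> GlobData; ocax : is_omega_cat ocdata }.

Definition is_omega_functor (C D : GlobData) (f : C -> D) : Prop :=
  (forall x, dim (f x) = dim x) /\
  (forall x, f (src x) = src (f x)) /\
  (forall x, f (tgt x) = tgt (f x)) /\
  (forall u, f (idc u) = idc (f u)) /\
  (forall p x y, composable p x y -> f (comp p y x) = comp p (f y) (f x)).

Record ofun (C D : OmegaCat) := { ofn :> C -> D; ofn_ax : is_omega_functor ofn }.

Record ExpCat := {
  ecat :> OmegaCat;
  origin : ecat;
  xi : ecat -> ecat;
  expax : is_expansion origin xi }.

Arguments origin : clear implicits.
Arguments xi : clear implicits.

Record efun (C D : ExpCat) := {
  efn :> ofun C D;
  efn_o : efn (origin C) = origin D;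
  efn_xi : forall x, efn (xi C x) = xi D (efn x) }.

Record Category := {
  ob :> Type;
  hom : ob -> ob -> Type;
  cid : forall a, hom a a;
  cmp : forall a b c, hom b c -> hom a b -> hom a c;
  cmp_id_l : forall a b (f : hom a b), cmp (cid b) f = f;
  cmp_id_r : forall a b (f : hom a b), cmp f (cid a) = f;
  cmp_assoc : forall a b c d (f : hom a b) (g : hom b c) (h : hom c d),
      cmp h (cmp g f) = cmp (cmp h g) f }.

Arguments hom {_} _ _.
Arguments cid {_} _.
Arguments cmp {_ _ _ _} _ _.

Record Functor (C D : Category) := {
  fobj : C -> D;
  fmap : forall a b, hom a b -> hom (fobj a) (fobj b);
  fmap_id : forall a, fmap (cid a) = cid (fobj a);
  fmap_cmp : forall a b c (f : hom a b) (g : hom b c),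
      fmap (cmp g f) = cmp (fmap g) (fmap f) }.

Arguments fobj {C D} _ _.
Arguments fmap {C D} _ {a b} _.

Section Monadic.
Variables (C D : Category) (U : Functor D C).

Record Adjunction (F : Functor C D) := {
  adj_unit : forall c : C, hom c (fobj U (fobj F c));
  adj_counit : forall d : D, hom (fobj F (fobj U d)) d;
  adj_unit_nat : forall c c' (g : hom c c'),
      cmp (fmap U (fmap F g)) (adj_unit c) = cmp (adj_unit c') g;
  adj_counit_nat : forall d d' (h : hom d d'),
      cmp h (adj_counit d) = cmp (adj_counit d') (fmap F (fmap U h));
  adj_tri1 : forall c, cmp (adj_counit (fobj F c)) (fmap F (adj_unit c)) = cid (fobj F c);
  adj_tri2 : forall d, cmp (fmap U (adj_counit d)) (adj_unit (fobj U d)) = cid (fobj U d) }.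

Variables (F : Functor C D) (adj : Adjunction F).

(* Eilenberg–Moore algebras of the monad T = UF, with mu = U eps F *)
Definition is_algebra (A : C) (a : hom (fobj U (fobj F A)) A) : Prop :=
  cmp a (adj_unit adj A) = cid A /\
  cmp a (fmap U (fmap F a)) = cmp a (fmap U (adj_counit adj (fobj F A))).

Definition is_alg_hom (A B : C) (a : hom (fobj U (fobj F A)) A)
    (b : hom (fobj U (fobj F B)) B) (h : hom A B) : Prop :=
  cmp b (fmap U (fmap F h)) = cmp h a.

(* the comparison functor K : D -> C^T, d |-> (U d, U eps_d), f |-> U f,
   is fully faithful and essentially surjective *)
Definition comparison_equivalence : Prop :=
  (forall d d' (f g : hom d d'), fmap U f = fmap U g -> f = g) /\
  (forall d d' (g : hom (fobj U d) (fobj U d')),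
      is_alg_hom (fmap U (adj_counit adj d)) (fmap U (adj_counit adj d')) g ->
      exists f : hom d d', fmap U f = g) /\
  (forall (A : C) (a : hom (fobj U (fobj F A)) A), is_algebra a ->
      exists (d : D) (h : hom (fobj U d) A) (h' : hom A (fobj U d)),
        cmp h h' = cid A /\ cmp h' h = cid (fobj U d) /\
        is_alg_hom (fmap U (adj_counit adj d)) a h /\
        is_alg_hom a (fmap U (adj_counit adj d)) h').

End Monadic.

Definition monadic (C D : Category) (U : Functor D C) : Prop :=
  exists (F : Functor C D) (adj : Adjunction U F), comparison_equivalence adj.

Lemma ofun_eq (C D : OmegaCat) (f g : ofun C D) : (forall x, f x = g x) -> f = g.
Proof.
  destruct f as [f pf], g as [g pg]; simpl; intro H.
  assert (f = g) by (apply functional_extensionality; exact H); subst g.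
  f_equal; apply proof_irrelevance.
Qed.

Lemma iter_comm (A B : Type) (f : A -> B) (s : A -> A) (s' : B -> B) :
  (forall x, f (s x) = s' (f x)) -> forall k x, f (Nat.iter k s x) = Nat.iter k s' (f x).
Proof. intros H k; induction k; intro x; simpl; [reflexivity| rewrite H, IHk; reflexivity]. Qed.

Lemma functor_composable (C D : GlobData) (f : C -> D) :
  is_omega_functor f -> forall p x y, composable p x y -> composable p (f x) (f y).
Proof.
  intros [Hd [Hs [Ht _]]] p x y [H1 [H2 H3]]; unfold composable, srcn, tgtn in *.
  rewrite !Hd; repeat split; auto.
  rewrite <- (iter_comm Hs), <- (iter_comm Ht), H3; reflexivity.
Qed.

Definition ofun_id (C : OmegaCat) : ofun C C.
Proof.
  refine {| ofn := fun x => x |}.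
  repeat split; auto.
Defined.

Definition ofun_comp (A B C : OmegaCat) (g : ofun B C) (f : ofun A B) : ofun A C.
Proof.
  refine {| ofn := fun x => g (f x) |}.
  destruct f as [f pf], g as [g pg]; simpl.
  pose proof (functor_composable pf) as cf.
  destruct pf as [fd [fs [ft [fi fc]]]], pg as [gd [gs [gt [gi gc]]]].
  repeat split; intros.
  - rewrite gd, fd; auto.
  - rewrite fs, gs; auto.
  - rewrite ft, gt; auto.
  - rewrite fi, gi; auto.
  - rewrite fc, gc; auto.
Defined.

Definition OmegaCatC : Category.
Proof.
  refine {| ob := OmegaCat; hom := ofun; cid := ofun_id; cmp := fun a b c g f => ofun_comp g f |};
  intros; apply ofun_eq; reflexivity.
Defined.

Lemma efun_eq (C D : ExpCat) (f g : efun C D) : efn f = efn g -> f = g.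
Proof.
  destruct f as [f f1 f2], g as [g g1 g2]; simpl; intro H; subst g.
  f_equal; apply proof_irrelevance.
Qed.

Definition efun_id (C : ExpCat) : efun C C.
Proof.
  refine {| efn := ofun_id C |}; reflexivity.
Defined.

Definition efun_comp (A B C : ExpCat) (g : efun B C) (f : efun A B) : efun A C.
Proof.
  refine {| efn := ofun_comp g f |}; simpl.
  - rewrite (efn_o f); apply (efn_o g).
  - intro x; rewrite (efn_xi f); apply (efn_xi g).
Defined.

Definition ExpC : Category.
Proof.
  refine {| ob := ExpCat; hom := efun; cid := efun_id; cmp := fun a b c g f => efun_comp g f |};
  intros; apply efun_eq, ofun_eq; reflexivity.
Defined.

Definition ForgetExp : Functor ExpC OmegaCatC.
Proof.
  refine {| fobj := (ecat : ExpC -> OmegaCatC);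
            fmap := fun a b (f : @hom ExpC a b) => (efn f : @hom OmegaCatC (ecat a) (ecat b)) |};
  reflexivity.
Defined.

(* The left adjoint F sends an omega-category C to the free
   expansion on C: raw terms built from the cells of C, an origin and the
   operations s, t, 1, *_p and xi, modulo the congruence generated by the
   composites of C and the axioms of omega-categories and expansions.  The
   only delicate point is that the target of xi_z and the value of
   xi_(y *_p x) are composites of lower-dimensional xi's whose definedness
   must itself be derived from the axioms; in the term model this is done by
   induction on dimension.

   For an algebra a : UFA -> A of the monad UF, setting o := a(o) and
   xi_x := a(xi_(eta x)) makes A an expansion: the unit law gives a . eta = id
   and the multiplication law says exactly that a commutes with xi, so a,
   being a strict omega-functor, carries every expansion axiom from FA to A.
   Conversely an omega-functor between expansions commutes with the counits
   iff it preserves origin and xi.  Hence the comparison functor is fully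
   faithful, and every algebra is, via the identity, the image of an
   expansion. *)

From Stdlib Require Import Arith List Lia.
From Stdlib Require Import ProofIrrelevance FunctionalExtensionality PropExtensionality ClassicalEpsilon.

(** * Globular combinatorics *)

Record globular (G : GlobData) : Prop := {
  gl_dim_src : forall x : G, dim (src x) = pred (dim x);
  gl_dim_tgt : forall x : G, dim (tgt x) = pred (dim x);
  gl_glob : forall x : G, 1 < dim x ->
      src (src x) = src (tgt x) /\ tgt (src x) = tgt (tgt x) }.

(* The non-equational axioms of [is_omega_cat] (with the dimension laws for
   [src]/[tgt] extended to 0-cells): the term model satisfies them before its
   equational axioms are proved, and the latter proofs rely on them. *)
Record well_sorted (G : GlobData) : Prop := {
  ws_dim_src : forall x : G, dim (src x) = pred (dim x);
  ws_dim_tgt : forall x : G, dim (tgt x) = pred (dim x);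
  ws_st0 : forall x : G, dim x = 0 -> src x = x /\ tgt x = x;
  ws_dim_id : forall u : G, dim (idc u) = S (dim u);
  ws_dim_comp : forall p (x y : G), composable p x y -> dim (comp p y x) = dim x;
  ws_glob : forall x : G, 1 < dim x ->
      src (src x) = src (tgt x) /\ tgt (src x) = tgt (tgt x);
  ws_st_id : forall u : G, src (idc u) = u /\ tgt (idc u) = u;
  ws_st_comp_top : forall p (x y : G), composable p x y -> S p = dim x ->
      src (comp p y x) = src x /\ tgt (comp p y x) = tgt y;
  ws_st_comp_low : forall p (x y : G), composable p x y -> S p < dim x ->
      src (comp p y x) = comp p (src y) (src x) /\
      tgt (comp p y x) = comp p (tgt y) (tgt x) }.

Existing Class globular.
Existing Class well_sorted.

Arguments gl_dim_src {G _}. Arguments gl_dim_tgt {G _}. Arguments gl_glob {G _}.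
Arguments ws_dim_src {G _}. Arguments ws_dim_tgt {G _}. Arguments ws_st0 {G _}.
Arguments ws_dim_id {G _}. Arguments ws_dim_comp {G _}. Arguments ws_glob {G _}.
Arguments ws_st_id {G _}. Arguments ws_st_comp_top {G _}. Arguments ws_st_comp_low {G _}.

#[global] Instance well_sorted_globular (G : GlobData) (HW : well_sorted G) : globular G.
Proof. destruct HW; now constructor. Qed.

#[global] Instance omega_cat_well_sorted (C : OmegaCat) : well_sorted C.
Proof.
  pose proof (ocax C) as H; constructor; try apply H.
  - intro x; destruct (dim x) eqn:E.
    + destruct (oc_st0 H E) as [-> _]; now rewrite E.
    + rewrite <- E; apply (oc_dim_src H); lia.
  - intro x; destruct (dim x) eqn:E.
    + destruct (oc_st0 H E) as [_ ->]; now rewrite E.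
    + rewrite <- E; apply (oc_dim_tgt H); lia.
Qed.

Section Globular.
Context {G : GlobData} {HG : globular G}.

Lemma srcn_src i (x : G) : i < dim x -> srcn i x = srcn i (src x).
Proof.
  intro; unfold srcn; rewrite gl_dim_src.
  replace (dim x - i) with (S (pred (dim x) - i)) by lia.
  apply Nat.iter_succ_r.
Qed.

Lemma tgtn_tgt i (x : G) : i < dim x -> tgtn i x = tgtn i (tgt x).
Proof.
  intro; unfold tgtn; rewrite gl_dim_tgt.
  replace (dim x - i) with (S (pred (dim x) - i)) by lia.
  apply Nat.iter_succ_r.
Qed.

Lemma srcn_tgt i (x : G) : S i < dim x -> srcn i (tgt x) = srcn i x.
Proof.
  intro. rewrite (srcn_src i x), (srcn_src i (src x)), (srcn_src i (tgt x))
    by (rewrite ?gl_dim_src, ?gl_dim_tgt; lia).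
  now destruct (gl_glob x) as [-> _]; [lia|].
Qed.

Lemma tgtn_src i (x : G) : S i < dim x -> tgtn i (src x) = tgtn i x.
Proof.
  intro. rewrite (tgtn_tgt i x), (tgtn_tgt i (tgt x)), (tgtn_tgt i (src x))
    by (rewrite ?gl_dim_src, ?gl_dim_tgt; lia).
  now destruct (gl_glob x) as [_ ->]; [lia|].
Qed.

Lemma composable_src {p} {x y : G} : composable p x y -> S p < dim x ->
  composable p (src x) (src y).
Proof.
  intros [C1 [C2 C3]] Hp. repeat split; rewrite ?gl_dim_src; try lia.
  rewrite tgtn_src, <- (srcn_src p y) by lia. exact C3.
Qed.
Lemma composable_tgt {p} {x y : G} : composable p x y -> S p < dim x ->
  composable p (tgt x) (tgt y).
Proof.
  intros [C1 [C2 C3]] Hp. repeat split; rewrite ?gl_dim_tgt; try lia.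
  rewrite <- (tgtn_tgt p x), srcn_tgt by lia. exact C3.
Qed.

End Globular.

Section WellSorted.
Context {G : GlobData} {HW : well_sorted G}.

Lemma dim_iter_src k (x : G) : dim (Nat.iter k src x) = dim x - k.
Proof. induction k; simpl; [lia|]. rewrite ws_dim_src, IHk; lia. Qed.
Lemma dim_iter_tgt k (x : G) : dim (Nat.iter k tgt x) = dim x - k.
Proof. induction k; simpl; [lia|]. rewrite ws_dim_tgt, IHk; lia. Qed.
Lemma dim_iter_idc k (x : G) : dim (Nat.iter k idc x) = dim x + k.
Proof. induction k; simpl; [lia|]. rewrite ws_dim_id, IHk; lia. Qed.

Lemma dim_srcn i (x : G) : dim (srcn i x) = Nat.min i (dim x).
Proof. unfold srcn; rewrite dim_iter_src; lia. Qed.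
Lemma dim_tgtn i (x : G) : dim (tgtn i x) = Nat.min i (dim x).
Proof. unfold tgtn; rewrite dim_iter_tgt; lia. Qed.
Lemma dim_idn n (u : G) : dim (idn n u) = Nat.max n (dim u).
Proof. unfold idn; rewrite dim_iter_idc; lia. Qed.

Lemma srcn_ge i (x : G) : dim x <= i -> srcn i x = x.
Proof. intro; unfold srcn; now replace (dim x - i) with 0 by lia. Qed.
Lemma tgtn_ge i (x : G) : dim x <= i -> tgtn i x = x.
Proof. intro; unfold tgtn; now replace (dim x - i) with 0 by lia. Qed.
Lemma idn_le n (u : G) : n <= dim u -> idn n u = u.
Proof. intro; unfold idn; now replace (n - dim u) with 0 by lia. Qed.

Lemma srcn_srcn i j (x : G) : i <= j -> srcn i (srcn j x) = srcn i x.
Proof.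
  intro. destruct (Nat.le_gt_cases (dim x) j); [now rewrite (srcn_ge j x)|].
  unfold srcn; rewrite dim_iter_src, <- Nat.iter_add; f_equal; lia.
Qed.
Lemma tgtn_tgtn i j (x : G) : i <= j -> tgtn i (tgtn j x) = tgtn i x.
Proof.
  intro. destruct (Nat.le_gt_cases (dim x) j); [now rewrite (tgtn_ge j x)|].
  unfold tgtn; rewrite dim_iter_tgt, <- Nat.iter_add; f_equal; lia.
Qed.

Lemma srcn_tgtn i j (x : G) : i < j -> srcn i (tgtn j x) = srcn i x.
Proof.
  intro. remember (dim x - j) as k eqn:Ek. revert x Ek.
  induction k; intros x Ek; [now rewrite tgtn_ge by lia|].
  rewrite (tgtn_tgt j x), IHk by (rewrite ?ws_dim_tgt; lia).
  apply srcn_tgt; lia.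
Qed.
Lemma tgtn_srcn i j (x : G) : i < j -> tgtn i (srcn j x) = tgtn i x.
Proof.
  intro. remember (dim x - j) as k eqn:Ek. revert x Ek.
  induction k; intros x Ek; [now rewrite srcn_ge by lia|].
  rewrite (srcn_src j x), IHk by (rewrite ?ws_dim_src; lia).
  apply tgtn_src; lia.
Qed.

Lemma srcn_idc i (u : G) : i <= dim u -> srcn i (idc u) = srcn i u.
Proof. intro; rewrite srcn_src by (rewrite ws_dim_id; lia). f_equal; apply HW. Qed.
Lemma tgtn_idc i (u : G) : i <= dim u -> tgtn i (idc u) = tgtn i u.
Proof. intro; rewrite tgtn_tgt by (rewrite ws_dim_id; lia). f_equal; apply HW. Qed.

Lemma srcn_iter_idc i k (u : G) : i <= dim u -> srcn i (Nat.iter k idc u) = srcn i u.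
Proof.
  induction k; intro; simpl; auto. rewrite srcn_idc; auto. rewrite dim_iter_idc; lia.
Qed.
Lemma tgtn_iter_idc i k (u : G) : i <= dim u -> tgtn i (Nat.iter k idc u) = tgtn i u.
Proof.
  induction k; intro; simpl; auto. rewrite tgtn_idc; auto. rewrite dim_iter_idc; lia.
Qed.
Lemma srcn_idn i n (u : G) : i <= dim u -> srcn i (idn n u) = srcn i u.
Proof. apply srcn_iter_idc. Qed.
Lemma tgtn_idn i n (u : G) : i <= dim u -> tgtn i (idn n u) = tgtn i u.
Proof. apply tgtn_iter_idc. Qed.

Lemma idn_idn i n (u : G) : dim u <= i <= n -> idn n u = Nat.iter (n - i) idc (idn i u).
Proof. intro. unfold idn. rewrite <- Nat.iter_add. f_equal; lia. Qed.
Lemma srcn_idn_ge i n (u : G) : dim u <= i <= n -> srcn i (idn n u) = idn i u.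
Proof.
  intro. rewrite (idn_idn i n u), srcn_iter_idc by (rewrite ?dim_idn; lia).
  apply srcn_ge. rewrite dim_idn; lia.
Qed.
Lemma tgtn_idn_ge i n (u : G) : dim u <= i <= n -> tgtn i (idn n u) = idn i u.
Proof.
  intro. rewrite (idn_idn i n u), tgtn_iter_idc by (rewrite ?dim_idn; lia).
  apply tgtn_ge. rewrite dim_idn; lia.
Qed.

Lemma srcn_comp_high p : forall n (x y : G), dim x = n -> composable p x y ->
  forall i, p < i <= n ->
  srcn i (comp p y x) = comp p (srcn i y) (srcn i x) /\
  tgtn i (comp p y x) = comp p (tgtn i y) (tgtn i x) /\
  composable p (srcn i x) (srcn i y) /\ composable p (tgtn i x) (tgtn i y).
Proof.
  induction n; intros x y Hx Hc i Hi; [lia|].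
  pose proof Hc as [C1 [C2 C3]].
  destruct (Nat.eq_dec i (S n)) as [->|Hne].
  { rewrite !srcn_ge, !tgtn_ge by (rewrite ?(ws_dim_comp _ _ _ Hc); lia).
    now repeat split. }
  pose proof (composable_src Hc ltac:(lia)) as Hcs.
  pose proof (composable_tgt Hc ltac:(lia)) as Hct.
  destruct (ws_st_comp_low p x y Hc) as [Es Et]; [lia|].
  rewrite (srcn_src i (comp p y x)), (tgtn_tgt i (comp p y x))
    by (rewrite (ws_dim_comp _ _ _ Hc); lia).
  rewrite Es, Et.
  destruct (IHn (src x) (src y)) with (i := i) as [A1 [_ [A3 _]]];
    [rewrite ws_dim_src; lia | auto | lia |].
  destruct (IHn (tgt x) (tgt y)) with (i := i) as [_ [B2 [_ B4]]];
    [rewrite ws_dim_tgt; lia | auto | lia |].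
  rewrite A1, B2, <- !srcn_src, <- !tgtn_tgt by lia.
  rewrite <- !srcn_src in A3 by lia. rewrite <- !tgtn_tgt in B4 by lia. auto.
Qed.

Lemma srcn_comp_low {p} {x y : G} : composable p x y -> forall i, i <= p ->
  srcn i (comp p y x) = srcn i x /\ tgtn i (comp p y x) = tgtn i y.
Proof.
  intros Hc i Hi. pose proof Hc as [C1 [C2 C3]].
  destruct (srcn_comp_high p (dim x) x y eq_refl Hc (S p)) as [A1 [A2 [A3 A4]]]; [lia|].
  rewrite <- (srcn_srcn i (S p) (comp p y x)), <- (tgtn_tgtn i (S p) (comp p y x)) by lia.
  rewrite A1, A2.
  destruct (ws_st_comp_top p _ _ A3) as [T1 _]; [rewrite dim_srcn; lia|].
  destruct (ws_st_comp_top p _ _ A4) as [_ T2]; [rewrite dim_tgtn; lia|].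
  split.
  - rewrite <- (srcn_srcn i p), (srcn_src p), T1, <- (srcn_src p)
      by (rewrite ?(ws_dim_comp _ _ _ A3), ?dim_srcn; lia).
    now rewrite !srcn_srcn by lia.
  - rewrite <- (tgtn_tgtn i p), (tgtn_tgt p), T2, <- (tgtn_tgt p)
      by (rewrite ?(ws_dim_comp _ _ _ A4), ?dim_tgtn; lia).
    now rewrite !tgtn_tgtn by lia.
Qed.

Lemma composable_assoc p (x y z : G) : composable p x y -> composable p y z ->
  composable p x (comp p z y) /\ composable p (comp p y x) z.
Proof.
  intros Hxy Hyz. pose proof Hxy as [A1 [A2 A3]]. pose proof Hyz as [B1 [B2 B3]].
  split; repeat split;
    rewrite ?(ws_dim_comp _ _ _ Hyz), ?(ws_dim_comp _ _ _ Hxy); try lia.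
  - now rewrite (proj1 (srcn_comp_low Hyz p (le_n p))).
  - now rewrite (proj2 (srcn_comp_low Hxy p (le_n p))).
Qed.

Lemma composable_units p (x : G) : p < dim x ->
  composable p x (idn (dim x) (tgtn p x)) /\ composable p (idn (dim x) (srcn p x)) x.
Proof.
  intro; split; (split; [|split]); rewrite ?dim_idn, ?dim_srcn, ?dim_tgtn; try lia.
  - rewrite srcn_idn, (srcn_ge p (tgtn p x)); rewrite ?dim_tgtn; auto; lia.
  - rewrite tgtn_idn, (tgtn_ge p (srcn p x)); rewrite ?dim_srcn; auto; lia.
Qed.

Lemma composable_idc p (x y : G) : composable p x y -> composable p (idc x) (idc y).
Proof.
  intros [A1 [A2 A3]]; repeat split; rewrite ?ws_dim_id; try lia.
  now rewrite srcn_idc, tgtn_idc by lia.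
Qed.

Lemma composable_interchange p q (x y x' y' : G) : q < p ->
  composable p x y -> composable p x' y' -> composable q x x' -> composable q y y' ->
  composable q (comp p y x) (comp p y' x') /\ composable p (comp q x' x) (comp q y' y).
Proof.
  intros Hqp C1 C2 C3 C4.
  pose proof C1 as [A1 [A2 A3]]. pose proof C2 as [B1 [B2 B3]].
  pose proof C3 as [D1 [D2 D3]]. pose proof C4 as [E1 [E2 E3]].
  split; repeat split; rewrite ?(ws_dim_comp _ _ _ C1), ?(ws_dim_comp _ _ _ C2),
    ?(ws_dim_comp _ _ _ C3), ?(ws_dim_comp _ _ _ C4); try lia.
  - rewrite (proj2 (srcn_comp_low C1 q ltac:(lia))),
      (proj1 (srcn_comp_low C2 q ltac:(lia))).
    rewrite <- (tgtn_srcn q p y), <- A3, tgtn_tgtn by lia. exact D3.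
  - destruct (srcn_comp_high q (dim x) x x' eq_refl C3 p) as [_ [F2 _]]; [lia|].
    destruct (srcn_comp_high q (dim y) y y' eq_refl C4 p) as [F1 _]; [lia|].
    now rewrite F1, F2, A3, B3.
Qed.

End WellSorted.

(** * Chains in the expansion axioms *)

Lemma chain_S {G : GlobData} (xi : G -> G) b x k :
  chain xi b x (S k) = pcomp k (chain xi b x k) (xi (srcn k x)).
Proof. unfold chain. now rewrite seq_S, fold_left_app. Qed.

Lemma chain_ext {G : GlobData} (xi : G -> G) b x x' k :
  (forall i, i < k -> srcn i x = srcn i x') -> chain xi b x k = chain xi b x' k.
Proof.
  induction k; intro E; auto. rewrite !chain_S, IHk, E by auto. reflexivity.
Qed.

Definition pcomposable {G : GlobData} p (y x : G) :=
  composable p (idn (Nat.max (dim x) (dim y)) x) (idn (Nat.max (dim x) (dim y)) y).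

(* The source/target axioms for [xi] are only assumed below dimension [N],
   so that the term model can establish them by induction on dimension. *)
Section Chain.
Context {G : GlobData} {HW : well_sorted G}.
Variables (o : G) (xi : G -> G) (N : nat).
Hypothesis xi_dim : forall x, dim (xi x) = S (dim x).
Hypothesis xi_st0 : forall x, dim x = 0 -> src (xi x) = o /\ tgt (xi x) = x.
Hypothesis xi_stS : forall z, 0 < dim z -> dim z < N ->
  src (xi z) = xi (tgt z) /\ tgt (xi z) = chain xi z z (dim z).

Definition chain_pcomposable b x k :=
  forall i, i < k -> pcomposable i (chain xi b x i) (xi (srcn i x)).

Lemma tgt_xi z : dim z < N -> tgt (xi z) = chain xi z z (dim z).
Proof.
  intro. destruct (dim z) eqn:E; [now apply xi_st0|].
  rewrite <- E. apply xi_stS; lia.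
Qed.

Lemma tgt_xi_srcn k x : k < N -> k <= dim x -> tgt (xi (srcn k x)) = chain xi (srcn k x) x k.
Proof.
  intros. rewrite tgt_xi, dim_srcn by (rewrite dim_srcn; lia).
  replace (Nat.min k (dim x)) with k by lia.
  apply chain_ext. intros; apply srcn_srcn; lia.
Qed.

Lemma chain_spec k : k <= N -> forall b x, k <= dim b -> k <= dim x ->
  (forall i, i < k -> srcn i b = srcn i x) ->
  dim (chain xi b x k) = dim b /\ chain_pcomposable b x k /\
  (forall j, k <= j <= dim b -> srcn j (chain xi b x k) = chain xi (srcn j b) x k /\
                               tgtn j (chain xi b x k) = chain xi (tgtn j b) x k).
Proof.
  induction k; intros HkN b x Hb Hx Hbx.
  { repeat split; intros; lia. }
  destruct (IHk ltac:(lia) b x ltac:(lia) ltac:(lia) ltac:(intros; apply Hbx; lia))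
    as [Dacc [OK Sacc]].
  set (acc := chain xi b x k) in *.
  set (ksi := xi (srcn k x)).
  assert (Dk : dim ksi = S k) by (unfold ksi; rewrite xi_dim, dim_srcn; lia).
  assert (Hm : Nat.max (dim ksi) (dim acc) = dim b) by lia.
  assert (Eacc : idn (dim b) acc = acc) by (apply idn_le; lia).
  assert (Cc : composable k (idn (dim b) ksi) acc).
  { repeat split; rewrite ?dim_idn; try lia.
    rewrite tgtn_idn, tgtn_tgt, tgtn_ge by (rewrite ?ws_dim_tgt, ?Dk; lia).
    unfold ksi; rewrite tgt_xi_srcn by lia.
    rewrite (proj1 (Sacc k ltac:(lia))). f_equal. symmetry; apply Hbx; lia. }
  assert (Echain : chain xi b x (S k) = comp k acc (idn (dim b) ksi)).
  { rewrite chain_S. fold acc ksi. unfold pcomp. now rewrite Hm, Eacc. }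
  split; [|split].
  - rewrite Echain, (ws_dim_comp _ _ _ Cc), dim_idn; lia.
  - intros i Hi. destruct (Nat.eq_dec i k) as [->|]; [|apply OK; lia].
    unfold pcomposable. fold acc ksi. now rewrite Hm, Eacc.
  - intros j Hj. rewrite Echain.
    destruct (srcn_comp_high k (dim b) (idn (dim b) ksi) acc
      ltac:(rewrite dim_idn; lia) Cc j) as [F1 [F2 _]]; [lia|].
    destruct (Sacc j ltac:(lia)) as [S1 S2].
    rewrite F1, F2, S1, S2, srcn_idn_ge, tgtn_idn_ge, !chain_S by lia.
    fold ksi. unfold pcomp.
    destruct (IHk ltac:(lia) (srcn j b) x ltac:(rewrite dim_srcn; lia) ltac:(lia)
      ltac:(intros; rewrite srcn_srcn by lia; apply Hbx; lia)) as [D1 _].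
    destruct (IHk ltac:(lia) (tgtn j b) x ltac:(rewrite dim_tgtn; lia) ltac:(lia)
      ltac:(intros; rewrite srcn_tgtn by lia; apply Hbx; lia)) as [D2 _].
    rewrite D1, D2, dim_srcn, dim_tgtn, Dk.
    replace (Nat.max (S k) (Nat.min j (dim b))) with j by lia.
    rewrite (idn_le j (chain xi (srcn j b) x k)) by (rewrite D1, dim_srcn; lia).
    now rewrite (idn_le j (chain xi (tgtn j b) x k)) by (rewrite D2, dim_tgtn; lia).
Qed.

Lemma tgtn_chain_low p k : k <= N -> forall b x, k <= dim b -> k <= dim x ->
  (forall i, i < k -> srcn i b = srcn i x) -> p <= k ->
  tgtn p (chain xi b x k) = chain xi (tgtn p b) x p.
Proof.
  intros HkN b x Hb Hx Hbx Hpk. induction k.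
  { now replace p with 0 by lia. }
  destruct (Nat.eq_dec p (S k)) as [->|Hne]; [apply (chain_spec (S k)); auto|].
  destruct (chain_spec k ltac:(lia) b x ltac:(lia) ltac:(lia) ltac:(intros; apply Hbx; lia))
    as [Dacc _].
  destruct (chain_spec (S k) HkN b x Hb Hx Hbx) as [_ [OK _]].
  pose proof (OK k ltac:(lia)) as Cok. unfold pcomposable in Cok.
  rewrite chain_S. unfold pcomp.
  rewrite (idn_le (Nat.max _ _) (chain xi b x k)) in * by (rewrite xi_dim, dim_srcn; lia).
  rewrite (proj2 (srcn_comp_low Cok p ltac:(lia))).
  apply IHk; auto; lia.
Qed.

Lemma srcn_xi p z : dim z < N -> p < dim z -> srcn (S p) (xi z) = xi (tgtn p z).
Proof.
  intros. unfold srcn, tgtn. rewrite xi_dim.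
  replace (S (dim z) - S p) with (dim z - p) by lia.
  assert (Hit : forall k, k <= dim z -> Nat.iter k src (xi z) = xi (Nat.iter k tgt z)).
  { induction k; intro Hk; auto. simpl. rewrite IHk by lia.
    apply xi_stS; rewrite dim_iter_tgt; lia. }
  apply Hit; lia.
Qed.

Lemma srcn_composable {p} {x y : G} i : composable p x y -> i < p ->
  srcn i (tgtn (S p) y) = srcn i x.
Proof.
  intros [C1 [C2 C3]] Hi.
  rewrite srcn_tgtn, <- (srcn_tgtn i p x), C3 by lia. symmetry; apply srcn_srcn; lia.
Qed.

Lemma chain_composable_spec {p} {x y : G} : composable p x y -> dim x < N ->
  dim (chain xi (tgtn (S p) y) x p) = S p /\
  chain_pcomposable (tgtn (S p) y) x p /\
  srcn p (chain xi (tgtn (S p) y) x p) = chain xi (srcn p (tgtn (S p) y)) x p.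
Proof.
  intros Hc HxN. pose proof Hc as [C1 [C2 C3]].
  destruct (chain_spec p ltac:(lia) (tgtn (S p) y) x ltac:(rewrite dim_tgtn; lia) ltac:(lia)
    (fun i Hi => srcn_composable i Hc Hi)) as [DK [OK SK]].
  rewrite dim_tgtn in DK. split; [lia|split; [exact OK|]].
  apply SK. rewrite dim_tgtn; lia.
Qed.

Lemma composable_xi_chain {p} {x y : G} : composable p x y -> dim x < N ->
  composable p (xi x) (idn (S (dim x)) (chain xi (tgtn (S p) y) x p)).
Proof.
  intros Hc HxN. pose proof Hc as [C1 [C2 C3]].
  destruct (chain_composable_spec Hc HxN) as [DK [_ SK]].
  repeat split; rewrite ?dim_idn, ?xi_dim; try lia.
  rewrite srcn_idn, SK, tgtn_tgt, tgt_xi by (rewrite ?xi_dim; lia).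
  rewrite (tgtn_chain_low p (dim x)) by (auto; lia).
  now rewrite srcn_tgtn, C3 by lia.
Qed.

Lemma composable_xi_rhs {p} {x y : G} : composable p x y -> dim x < N ->
  composable (S p) (xi y) (comp p (idn (S (dim x)) (chain xi (tgtn (S p) y) x p)) (xi x)).
Proof.
  intros Hc HxN. pose proof Hc as [C1 [C2 C3]].
  destruct (chain_composable_spec Hc HxN) as [DK _].
  pose proof (composable_xi_chain Hc HxN) as Cin.
  set (K := chain xi (tgtn (S p) y) x p) in *.
  repeat split; rewrite ?(ws_dim_comp _ _ _ Cin), ?xi_dim; try lia.
  rewrite tgtn_tgt, tgt_xi by (rewrite ?xi_dim; lia).
  rewrite (tgtn_chain_low (S p) (dim y)), chain_S by (auto; lia).
  rewrite (chain_ext xi _ y x p) by (intros i Hi; rewrite <- (srcn_composable i Hc Hi), srcn_tgtn by lia; reflexivity).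
  fold K.
  destruct (srcn_comp_high p (S (dim x)) (xi x) (idn (S (dim x)) K)
    ltac:(rewrite xi_dim; lia) Cin (S p)) as [F1 _]; [lia|].
  rewrite F1, srcn_idn_ge, srcn_xi by lia.
  unfold pcomp. rewrite xi_dim, dim_srcn, DK, C3.
  replace (Nat.max (S (Nat.min p (dim y))) (S p)) with (S p) by lia.
  now rewrite !idn_le by (rewrite ?xi_dim, ?dim_srcn; lia).
Qed.

Definition expansion_rhs_pcomposable p (x y : G) :=
  chain_pcomposable (tgtn (S p) y) x p /\
  pcomposable p (chain xi (tgtn (S p) y) x p) (xi x) /\
  pcomposable (S p) (pcomp p (chain xi (tgtn (S p) y) x p) (xi x)) (xi y).

Lemma expansion_rhs_defined {p} {x y : G} : composable p x y -> dim x < N ->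
  expansion_rhs_pcomposable p x y.
Proof.
  intros Hc HxN. pose proof Hc as [C1 [C2 C3]].
  destruct (chain_composable_spec Hc HxN) as [DK [OK _]].
  pose proof (composable_xi_chain Hc HxN) as Cin.
  pose proof (composable_xi_rhs Hc HxN) as Cout.
  assert (Hm : Nat.max (dim (xi x)) (dim (chain xi (tgtn (S p) y) x p)) = S (dim x))
    by (rewrite xi_dim, DK; lia).
  assert (Hin : pcomp p (chain xi (tgtn (S p) y) x p) (xi x)
                = comp p (idn (S (dim x)) (chain xi (tgtn (S p) y) x p)) (xi x))
    by (unfold pcomp; rewrite Hm, (idn_le _ (xi x)) by (rewrite xi_dim; lia); reflexivity).
  split; [exact OK|split].
  - unfold pcomposable. rewrite Hm, (idn_le _ (xi x)) by (rewrite xi_dim; lia). exact Cin.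
  - unfold pcomposable. rewrite Hin, (ws_dim_comp _ _ _ Cin), !xi_dim, C2, Nat.max_id.
    rewrite !idn_le by (rewrite ?(ws_dim_comp _ _ _ Cin), ?xi_dim; lia). exact Cout.
Qed.

End Chain.

(* A relation preserved by all operations (by composition only under the
   side condition [Cond]) also relates the chains and right-hand sides of the
   expansion axioms. *)
Record simulation {GS GT : GlobData} (xiS : GS -> GS) (xiT : GT -> GT)
    (R : GS -> GT -> Prop) (Cond : nat -> GS -> GS -> GT -> GT -> Prop) : Prop := {
  sim_dim : forall a u, R a u -> dim a = dim u;
  sim_src : forall a u, R a u -> R (src a) (src u);
  sim_tgt : forall a u, R a u -> R (tgt a) (tgt u);
  sim_idc : forall a u, R a u -> R (idc a) (idc u);
  sim_xi : forall a u, R a u -> R (xiS a) (xiT u);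
  sim_comp : forall p a b u v, R a u -> R b v -> Cond p a b u v ->
    R (comp p b a) (comp p v u) }.

Arguments sim_dim {GS GT xiS xiT R Cond} _ {a u}.
Arguments sim_src {GS GT xiS xiT R Cond} _ {a u}.
Arguments sim_tgt {GS GT xiS xiT R Cond} _ {a u}.
Arguments sim_idc {GS GT xiS xiT R Cond} _ {a u}.
Arguments sim_xi {GS GT xiS xiT R Cond} _ {a u}.
Arguments sim_comp {GS GT xiS xiT R Cond} _ {p a b u v}.

Section Simulation.
Context {GS GT : GlobData} {xiS : GS -> GS} {xiT : GT -> GT} {R : GS -> GT -> Prop}
  {Cond : nat -> GS -> GS -> GT -> GT -> Prop}.
Variable Hsim : simulation xiS xiT R Cond.

Definition pcond p (b a : GS) (v u : GT) :=
  Cond p (idn (Nat.max (dim a) (dim b)) a) (idn (Nat.max (dim a) (dim b)) b)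
         (idn (Nat.max (dim u) (dim v)) u) (idn (Nat.max (dim u) (dim v)) v).

Lemma sim_iter (s : GS -> GS) (t : GT -> GT) :
  (forall a u, R a u -> R (s a) (t u)) ->
  forall k a u, R a u -> R (Nat.iter k s a) (Nat.iter k t u).
Proof. intros Hst k; induction k; simpl; auto. Qed.

Lemma sim_srcn i a u : R a u -> R (srcn i a) (srcn i u).
Proof. intro Hr. unfold srcn. rewrite (sim_dim Hsim Hr). apply sim_iter; auto. intros; now apply Hsim. Qed.
Lemma sim_tgtn i a u : R a u -> R (tgtn i a) (tgtn i u).
Proof. intro Hr. unfold tgtn. rewrite (sim_dim Hsim Hr). apply sim_iter; auto. intros; now apply Hsim. Qed.
Lemma sim_idn n a u : R a u -> R (idn n a) (idn n u).
Proof. intro Hr. unfold idn. rewrite (sim_dim Hsim Hr). apply sim_iter; auto. intros; now apply Hsim. Qed.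

Lemma sim_pcomp p a b u v : R a u -> R b v -> pcond p b a v u ->
  R (pcomp p b a) (pcomp p v u).
Proof.
  intros Ha Hb Hc. unfold pcomp, pcond in *. rewrite (sim_dim Hsim Ha), (sim_dim Hsim Hb) in *.
  apply (sim_comp Hsim); auto; now apply sim_idn.
Qed.

Lemma sim_chain {b x v u k} : R b v -> R x u ->
  (forall i, i < k -> pcond i (chain xiS b x i) (xiS (srcn i x))
                              (chain xiT v u i) (xiT (srcn i u))) ->
  R (chain xiS b x k) (chain xiT v u k).
Proof.
  intros Hb Hx Hc. induction k; auto.
  rewrite !chain_S. apply sim_pcomp; auto. now apply (sim_xi Hsim), sim_srcn.
Qed.

Lemma sim_expansion_rhs {p x y u v} : R x u -> R y v ->
  (forall i, i < p -> pcond i (chain xiS (tgtn (S p) y) x i) (xiS (srcn i x))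
                              (chain xiT (tgtn (S p) v) u i) (xiT (srcn i u))) ->
  pcond p (chain xiS (tgtn (S p) y) x p) (xiS x) (chain xiT (tgtn (S p) v) u p) (xiT u) ->
  pcond (S p) (pcomp p (chain xiS (tgtn (S p) y) x p) (xiS x)) (xiS y)
              (pcomp p (chain xiT (tgtn (S p) v) u p) (xiT u)) (xiT v) ->
  R (pcomp (S p) (pcomp p (chain xiS (tgtn (S p) y) x p) (xiS x)) (xiS y))
    (pcomp (S p) (pcomp p (chain xiT (tgtn (S p) v) u p) (xiT u)) (xiT v)).
Proof.
  intros Hx Hy C1 C2 C3.
  apply sim_pcomp; [now apply (sim_xi Hsim)| |exact C3].
  apply sim_pcomp; [now apply (sim_xi Hsim)| |exact C2].
  apply sim_chain; auto. now apply sim_tgtn.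
Qed.

End Simulation.

Section Expansions.
Context {G : GlobData} {HW : well_sorted G}.
Variables (o : G) (xi : G -> G) (Hexp : is_expansion o xi).

Lemma expansion_chain_pcomposable b x k : k <= dim b -> k <= dim x ->
  (forall i, i < k -> srcn i b = srcn i x) -> chain_pcomposable xi b x k.
Proof.
  intros Hb Hx Hbx.
  apply (chain_spec o xi (S k) (ex_dim Hexp) (ex_st0 Hexp)
    (fun z Hz _ => ex_stS Hexp Hz) k ltac:(lia) b x Hb Hx Hbx).
Qed.

Lemma expansion_rhs_composable p (x y : G) : composable p x y ->
  expansion_rhs_pcomposable xi p x y.
Proof.
  intro Hc. apply (expansion_rhs_defined o xi (S (dim x)) (ex_dim Hexp) (ex_st0 Hexp)
    (fun z Hz _ => ex_stS Hexp Hz) Hc). lia.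
Qed.

End Expansions.

Section OmegaFunctors.
Context {C D : OmegaCat} (f : ofun C D).

Lemma ofun_dim x : dim (f x) = dim x.
Proof. apply (ofn_ax f). Qed.
Lemma ofun_src x : f (src x) = src (f x).
Proof. apply (ofn_ax f). Qed.
Lemma ofun_tgt x : f (tgt x) = tgt (f x).
Proof. apply (ofn_ax f). Qed.
Lemma ofun_idc x : f (idc x) = idc (f x).
Proof. apply (ofn_ax f). Qed.
Lemma ofun_composite p x y : composable p x y -> f (comp p y x) = comp p (f y) (f x).
Proof. apply (ofn_ax f). Qed.
Lemma ofun_composable p x y : composable p x y -> composable p (f x) (f y).
Proof. apply functor_composable, (ofn_ax f). Qed.

End OmegaFunctors.

(** * The term model *)

Set Implicit Arguments.

Section Terms.
Variable C : OmegaCat.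

Inductive term : Type :=
| gen (c : C) | orig | txi (t : term) | tsrc (t : term) | ttgt (t : term) | tid (t : term)
| tcomp (p : nat) (y x : term).

Fixpoint tdim (t : term) : nat :=
  match t with
  | gen c => dim c | orig => 0 | txi t => S (tdim t) | tsrc t => pred (tdim t)
  | ttgt t => pred (tdim t) | tid t => S (tdim t) | tcomp _ _ x => tdim x
  end.

Definition Terms : GlobData :=
  {| cell := term; dim := tdim; src := tsrc; tgt := ttgt; idc := tid; comp := tcomp |}.

Notation tsrcn := (@srcn Terms).
Notation ttgtn := (@tgtn Terms).
Notation tidn := (@idn Terms).
Notation tpcomp := (@pcomp Terms).
Notation tchain := (@chain Terms txi).

Inductive eqv : term -> term -> Prop :=
| e_refl t : eqv t t
| e_sym t u : eqv t u -> eqv u t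
| e_trans t u w : eqv t u -> eqv u w -> eqv t w
| e_src t u : eqv t u -> eqv (tsrc t) (tsrc u)
| e_tgt t u : eqv t u -> eqv (ttgt t) (ttgt u)
| e_id t u : eqv t u -> eqv (tid t) (tid u)
| e_xi t u : eqv t u -> eqv (txi t) (txi u)
| e_comp p y y' x x' : eqv y y' -> eqv x x' -> eqv (tcomp p y x) (tcomp p y' x')
| g_src c : eqv (gen (src c)) (tsrc (gen c))
| g_tgt c : eqv (gen (tgt c)) (ttgt (gen c))
| g_id c : eqv (gen (idc c)) (tid (gen c))
| g_comp p (x y : C) : composable p x y -> eqv (gen (comp p y x)) (tcomp p (gen y) (gen x))
| a_st0s x : tdim x = 0 -> eqv (tsrc x) x
| a_st0t x : tdim x = 0 -> eqv (ttgt x) x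
| a_glob1 x : 1 < tdim x -> eqv (tsrc (tsrc x)) (tsrc (ttgt x))
| a_glob2 x : 1 < tdim x -> eqv (ttgt (tsrc x)) (ttgt (ttgt x))
| a_sid u : eqv (tsrc (tid u)) u
| a_tid u : eqv (ttgt (tid u)) u
| a_tops p x y : p < tdim x -> tdim y = tdim x -> eqv (ttgtn p x) (tsrcn p y) ->
    S p = tdim x -> eqv (tsrc (tcomp p y x)) (tsrc x)
| a_topt p x y : p < tdim x -> tdim y = tdim x -> eqv (ttgtn p x) (tsrcn p y) ->
    S p = tdim x -> eqv (ttgt (tcomp p y x)) (ttgt y)
| a_lows p x y : p < tdim x -> tdim y = tdim x -> eqv (ttgtn p x) (tsrcn p y) ->
    S p < tdim x -> eqv (tsrc (tcomp p y x)) (tcomp p (tsrc y) (tsrc x))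
| a_lowt p x y : p < tdim x -> tdim y = tdim x -> eqv (ttgtn p x) (tsrcn p y) ->
    S p < tdim x -> eqv (ttgt (tcomp p y x)) (tcomp p (ttgt y) (ttgt x))
| a_assoc p x y z : p < tdim x -> tdim y = tdim x -> eqv (ttgtn p x) (tsrcn p y) ->
    p < tdim y -> tdim z = tdim y -> eqv (ttgtn p y) (tsrcn p z) ->
    eqv (tcomp p (tcomp p z y) x) (tcomp p z (tcomp p y x))
| a_unitl p x : p < tdim x -> eqv (tcomp p (tidn (tdim x) (ttgtn p x)) x) x
| a_unitr p x : p < tdim x -> eqv (tcomp p x (tidn (tdim x) (tsrcn p x))) x
| a_idcomp p x y : p < tdim x -> tdim y = tdim x -> eqv (ttgtn p x) (tsrcn p y) ->
    eqv (tid (tcomp p y x)) (tcomp p (tid y) (tid x))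
| a_inter p q x y x' y' : q < p ->
    p < tdim x -> tdim y = tdim x -> eqv (ttgtn p x) (tsrcn p y) ->
    p < tdim x' -> tdim y' = tdim x' -> eqv (ttgtn p x') (tsrcn p y') ->
    q < tdim x -> tdim x' = tdim x -> eqv (ttgtn q x) (tsrcn q x') ->
    q < tdim y -> tdim y' = tdim y -> eqv (ttgtn q y) (tsrcn q y') ->
    eqv (tcomp q (tcomp p y' x') (tcomp p y x)) (tcomp p (tcomp q y' y) (tcomp q x' x))
| x_st0s x : tdim x = 0 -> eqv (tsrc (txi x)) orig
| x_st0t x : tdim x = 0 -> eqv (ttgt (txi x)) x
| x_stSs x : 0 < tdim x -> eqv (tsrc (txi x)) (txi (ttgt x))
| x_stSt x : 0 < tdim x -> eqv (ttgt (txi x)) (tchain x x (tdim x))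
| x_comp p x y : p < tdim x -> tdim y = tdim x -> eqv (ttgtn p x) (tsrcn p y) ->
    eqv (txi (tcomp p y x))
        (tpcomp (S p) (tpcomp p (tchain (ttgtn (S p) y) x p) (txi x)) (txi y))
| x_id u : eqv (txi (tid u)) (tid (txi u))
| x_xi u : eqv (txi (txi u)) (tid (txi u))
| x_o : eqv (txi orig) (tid orig).

Lemma tdim_iter_src k t : tdim (Nat.iter k tsrc t) = tdim t - k.
Proof. induction k; simpl; [lia|]. rewrite IHk; lia. Qed.
Lemma tdim_iter_tgt k t : tdim (Nat.iter k ttgt t) = tdim t - k.
Proof. induction k; simpl; [lia|]. rewrite IHk; lia. Qed.
Lemma tdim_iter_id k t : tdim (Nat.iter k tid t) = tdim t + k.
Proof. induction k; simpl; [lia|]. rewrite IHk; lia. Qed.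
Lemma tdim_srcn i t : tdim (tsrcn i t) = Nat.min i (tdim t).
Proof. unfold srcn; simpl. rewrite tdim_iter_src; lia. Qed.
Lemma tdim_tgtn i t : tdim (ttgtn i t) = Nat.min i (tdim t).
Proof. unfold tgtn; simpl. rewrite tdim_iter_tgt; lia. Qed.
Lemma tdim_idn n t : tdim (tidn n t) = Nat.max n (tdim t).
Proof. unfold idn; simpl. rewrite tdim_iter_id; lia. Qed.
Lemma tdim_pcomp p y x : tdim (tpcomp p y x) = Nat.max (tdim x) (tdim y).
Proof. unfold pcomp; simpl. rewrite tdim_idn; simpl; lia. Qed.
Lemma tdim_chain b x k : k <= tdim x -> tdim (tchain b x k) = Nat.max (tdim b) k.
Proof.
  induction k; intro; [unfold chain; simpl; lia|]. rewrite chain_S, tdim_pcomp.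
  change (@dim Terms) with tdim. cbn [tdim].
  rewrite tdim_srcn, IHk by lia. lia.
Qed.

Lemma eqv_dim t u : eqv t u -> tdim t = tdim u.
Proof.
  induction 1; try (simpl; lia).
  - simpl; rewrite ws_dim_src; auto.
  - simpl; rewrite ws_dim_tgt; auto.
  - simpl; rewrite ws_dim_id; auto.
  - simpl; apply ws_dim_comp; auto.
  - cbn [tdim]. rewrite tdim_idn, tdim_srcn; lia.
  - cbn [tdim]. rewrite tdim_chain by lia; lia.
  - cbn [tdim]. rewrite !tdim_pcomp. change (@dim Terms) with tdim. cbn [tdim].
    rewrite tdim_chain, tdim_tgtn by lia. lia.
Qed.

Lemma eqv_iter (s : term -> term) : (forall t u, eqv t u -> eqv (s t) (s u)) ->
  forall k t u, eqv t u -> eqv (Nat.iter k s t) (Nat.iter k s u).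
Proof. intros Hs k; induction k; simpl; auto. Qed.

Lemma eqv_srcn i t u : eqv t u -> eqv (tsrcn i t) (tsrcn i u).
Proof. intro E. unfold srcn; simpl. rewrite (eqv_dim E). apply eqv_iter; auto. exact e_src. Qed.
Lemma eqv_tgtn i t u : eqv t u -> eqv (ttgtn i t) (ttgtn i u).
Proof. intro E. unfold tgtn; simpl. rewrite (eqv_dim E). apply eqv_iter; auto. exact e_tgt. Qed.

Definition tcomposable p x y := p < tdim x /\ tdim y = tdim x /\ eqv (ttgtn p x) (tsrcn p y).

Lemma tcomposable_eqv p x x' y y' : eqv x x' -> eqv y y' -> tcomposable p x y -> tcomposable p x' y'.
Proof.
  intros Ex Ey [A [B D]]. pose proof (eqv_dim Ex); pose proof (eqv_dim Ey).
  repeat split; try lia.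
  apply e_trans with (ttgtn p x); [apply eqv_tgtn, e_sym; auto|].
  apply e_trans with (tsrcn p y); auto. apply eqv_srcn; auto.
Qed.

(* Only well-formed terms, whose composites are composable up to [eqv],
   are used as representatives; [eqv] alone does not see composability. *)
Inductive wf : term -> Prop :=
| w_gen c : wf (gen c)
| w_orig : wf orig
| w_xi t : wf t -> wf (txi t)
| w_src t : wf t -> wf (tsrc t)
| w_tgt t : wf t -> wf (ttgt t)
| w_id t : wf t -> wf (tid t)
| w_comp p x y : wf x -> wf y -> tcomposable p x y -> wf (tcomp p y x).

Definition fcell : Type := { P : term -> Prop | exists t, wf t /\ P = eqv t }.

Definition cls {t} (H : wf t) : fcell := exist _ (eqv t) (ex_intro _ t (conj H eq_refl)).

Lemma cls_eq t u (Ht : wf t) (Hu : wf u) : eqv t u -> cls Ht = cls Hu.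
Proof.
  intro E. apply subset_eq_compat. extensionality w.
  apply propositional_extensionality. split; intro.
  - apply e_trans with t; auto. now apply e_sym.
  - now apply e_trans with u.
Qed.

Lemma cls_inj t u (Ht : wf t) (Hu : wf u) : cls Ht = cls Hu -> eqv t u.
Proof. intro E. apply (f_equal (@proj1_sig _ _)) in E. simpl in E. rewrite E. apply e_refl. Qed.

Definition represents t (q : fcell) := exists H : wf t, cls H = q.

Lemma represents_cls t (H : wf t) : represents t (cls H).
Proof. now exists H. Qed.

Definition rep (q : fcell) : term :=
  proj1_sig (constructive_indefinite_description _ (proj2_sig q)).

Lemma represents_rep q : represents (rep q) q.
Proof.
  unfold rep. destruct (constructive_indefinite_description _ _) as [t [Ht E]].
  exists Ht. destruct q as [P Pp]. apply subset_eq_compat. simpl in E. auto.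
Qed.

Lemma represented (q : fcell) : exists t, represents t q.
Proof. exists (rep q); apply represents_rep. Qed.

Lemma represents_wf t q : represents t q -> wf t.
Proof. now intros [H _]. Qed.
Lemma represents_eqv t u q : represents t q -> represents u q -> eqv t u.
Proof. intros [H1 E1] [H2 E2]. apply (@cls_inj _ _ H1 H2). congruence. Qed.
Lemma represents_eq t u q r : represents t q -> represents u r -> eqv t u -> q = r.
Proof. intros [H1 <-] [H2 <-] E. now apply cls_eq. Qed.
Lemma represents_of_eqv t q u : represents t q -> wf u -> eqv t u -> represents u q.
Proof. intros [H1 <-] Hu E. exists Hu. now apply cls_eq, e_sym. Qed.

Section Lift.
Variables (op : term -> term) (op_wf : forall t, wf t -> wf (op t))
  (op_eqv : forall t u, eqv t u -> eqv (op t) (op u)).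

Definition flift (q : fcell) : fcell := cls (op_wf (represents_wf (represents_rep q))).

Lemma represents_flift t q : represents t q -> represents (op t) (flift q).
Proof.
  intro H. apply represents_of_eqv with (op (rep q)); [apply represents_cls| |].
  - apply op_wf, (represents_wf H).
  - apply op_eqv, (represents_eqv (represents_rep q) H).
Qed.

End Lift.

Definition fsrc := @flift tsrc w_src.
Definition ftgt := @flift ttgt w_tgt.
Definition fidc := @flift tid w_id.
Definition fxi := @flift txi w_xi.
Definition forig := cls w_orig.
Definition fdim (q : fcell) := tdim (rep q).

(* Non-composable pairs get the junk value [a]. *)
Definition fcomp p (b a : fcell) : fcell :=
  match excluded_middle_informative (tcomposable p (rep a) (rep b)) with
  | left Hc => cls (w_comp (represents_wf (represents_rep a))
                          (represents_wf (represents_rep b)) Hc)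
  | right _ => a
  end.

Definition FreeG : GlobData :=
  {| cell := fcell; dim := fdim; src := fsrc; tgt := ftgt; idc := fidc; comp := fcomp |}.

Lemma represents_dim t (q : FreeG) : represents t q -> dim q = tdim t.
Proof. intro H. apply eqv_dim, (represents_eqv (represents_rep q) H). Qed.

Lemma represents_src t (q : FreeG) : represents t q -> represents (tsrc t) (src q).
Proof. apply represents_flift, e_src. Qed.
Lemma represents_tgt t (q : FreeG) : represents t q -> represents (ttgt t) (tgt q).
Proof. apply represents_flift, e_tgt. Qed.
Lemma represents_idc t (q : FreeG) : represents t q -> represents (tid t) (idc q).
Proof. apply represents_flift, e_id. Qed.
Lemma represents_xi t q : represents t q -> represents (txi t) (fxi q).
Proof. apply represents_flift, e_xi. Qed.
Lemma represents_orig : represents orig forig.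
Proof. apply represents_cls. Qed.

Lemma represents_iter (s : term -> term) (s' : FreeG -> FreeG) :
  (forall t q, represents t q -> represents (s t) (s' q)) ->
  forall k t q, represents t q -> represents (Nat.iter k s t) (Nat.iter k s' q).
Proof. intros Hs k; induction k; simpl; auto. Qed.

Lemma represents_srcn i t (q : FreeG) : represents t q -> represents (tsrcn i t) (srcn i q).
Proof.
  intro H. unfold srcn. rewrite (represents_dim H). apply represents_iter; auto.
  exact represents_src.
Qed.
Lemma represents_tgtn i t (q : FreeG) : represents t q -> represents (ttgtn i t) (tgtn i q).
Proof.
  intro H. unfold tgtn. rewrite (represents_dim H). apply represents_iter; auto.
  exact represents_tgt.
Qed.
Lemma represents_idn n t (q : FreeG) : represents t q -> represents (tidn n t) (idn n q).
Proof.
  intro H. unfold idn. rewrite (represents_dim H). apply represents_iter; auto.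
  exact represents_idc.
Qed.

Lemma composable_represents p a b (u v : FreeG) : represents a u -> represents b v ->
  (composable p u v <-> tcomposable p a b).
Proof.
  intros Ha Hb. unfold composable, tcomposable. rewrite (represents_dim Ha), (represents_dim Hb).
  pose proof (represents_tgtn p Ha) as T. pose proof (represents_srcn p Hb) as S'.
  split; intros [A [B D]]; repeat split; auto.
  - rewrite D in T. apply (represents_eqv T S').
  - apply (represents_eq T S' D).
Qed.

Lemma represents_comp p a b (u v : FreeG) : represents a u -> represents b v ->
  composable p u v -> represents (tcomp p b a) (comp p v u).
Proof.
  intros Ha Hb Hc. apply (composable_represents p Ha Hb) in Hc. simpl; unfold fcomp.
  pose proof (represents_eqv (represents_rep u) Ha) as Eu.
  pose proof (represents_eqv (represents_rep v) Hb) as Ev.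
  destruct (excluded_middle_informative _) as [Hc'|Hn].
  - apply represents_of_eqv with (tcomp p (rep v) (rep u)); [apply represents_cls| |].
    + constructor; auto; eapply represents_wf; eauto.
    + now apply e_comp.
  - exfalso. apply Hn. apply tcomposable_eqv with a b; auto using e_sym.
Qed.

End Terms.

Arguments gen {C} c.
Arguments w_gen {C} c.

(** * The free expansion *)

Section FreeAxioms.
Variable C : OmegaCat.

Notation FreeG := (FreeG C).

Notation xiF := (@fxi C : FreeG -> FreeG).
Notation oF := (forig C : FreeG).

Local Ltac pick_rep q t Ht := destruct (represented q) as [t Ht].

#[global] Instance FreeG_globular : globular FreeG.
Proof.
  constructor.
  - intro q; pick_rep q t Ht. now rewrite (represents_dim (represents_src Ht)), (represents_dim Ht).
  - intro q; pick_rep q t Ht. now rewrite (represents_dim (represents_tgt Ht)), (represents_dim Ht).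
  - intros q Hq; pick_rep q t Ht. rewrite (represents_dim Ht) in Hq. split.
    + apply (represents_eq (represents_src (represents_src Ht)) (represents_src (represents_tgt Ht))).
      now apply a_glob1.
    + apply (represents_eq (represents_tgt (represents_src Ht)) (represents_tgt (represents_tgt Ht))).
      now apply a_glob2.
Qed.

Lemma free_st_comp_low p (x y : FreeG) : composable p x y -> S p < dim x ->
  src (comp p y x) = comp p (src y) (src x) /\ tgt (comp p y x) = comp p (tgt y) (tgt x).
Proof.
  intros Hc Hd. pick_rep x tx Hx. pick_rep y ty Hy.
  pose proof (represents_comp Hx Hy Hc) as Hxy.
  pose proof (composable_src Hc Hd) as Hcs. pose proof (composable_tgt Hc Hd) as Hct.
  destruct (proj1 (composable_represents p Hx Hy) Hc) as [A [B D]].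
  rewrite (represents_dim Hx) in Hd. split.
  - apply (represents_eq (represents_src Hxy)
      (represents_comp (represents_src Hx) (represents_src Hy) Hcs)). now apply a_lows.
  - apply (represents_eq (represents_tgt Hxy)
      (represents_comp (represents_tgt Hx) (represents_tgt Hy) Hct)). now apply a_lowt.
Qed.

#[global] Instance FreeG_well_sorted : well_sorted FreeG.
Proof.
  constructor; try apply FreeG_globular; [| | | | |apply free_st_comp_low].
  - intros q Hq; pick_rep q t Ht. rewrite (represents_dim Ht) in Hq. split.
    + apply (represents_eq (represents_src Ht) Ht). now apply a_st0s.
    + apply (represents_eq (represents_tgt Ht) Ht). now apply a_st0t.
  - intro q; pick_rep q t Ht. now rewrite (represents_dim (represents_idc Ht)), (represents_dim Ht).
  - intros p x y Hc. pick_rep x tx Hx. pick_rep y ty Hy.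
    now rewrite (represents_dim (represents_comp Hx Hy Hc)), (represents_dim Hx).
  - intro q; pick_rep q t Ht. split.
    + apply (represents_eq (represents_src (represents_idc Ht)) Ht). apply a_sid.
    + apply (represents_eq (represents_tgt (represents_idc Ht)) Ht). apply a_tid.
  - intros p x y Hc Hd. pick_rep x tx Hx. pick_rep y ty Hy.
    pose proof (represents_comp Hx Hy Hc) as Hxy.
    destruct (proj1 (composable_represents p Hx Hy) Hc) as [A [B D]].
    rewrite (represents_dim Hx) in Hd. split.
    + apply (represents_eq (represents_src Hxy) (represents_src Hx)). now apply a_tops.
    + apply (represents_eq (represents_tgt Hxy) (represents_tgt Hy)). now apply a_topt.
Qed.

Lemma free_assoc p (x y z : FreeG) : composable p x y -> composable p y z ->
  comp p (comp p z y) x = comp p z (comp p y x).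
Proof.
  intros Cxy Cyz. pick_rep x tx Hx. pick_rep y ty Hy. pick_rep z tz Hz.
  destruct (composable_assoc _ _ _ _ Cxy Cyz) as [C1 C2].
  pose proof (represents_comp Hy Hz Cyz) as Hyz. pose proof (represents_comp Hx Hy Cxy) as Hxy.
  apply (represents_eq (represents_comp Hx Hyz C1) (represents_comp Hxy Hz C2)).
  destruct (proj1 (composable_represents p Hx Hy) Cxy) as [A1 [A2 A3]].
  destruct (proj1 (composable_represents p Hy Hz) Cyz) as [B1 [B2 B3]].
  now apply a_assoc.
Qed.

Lemma free_unit_l p (x : FreeG) : p < dim x -> comp p (idn (dim x) (tgtn p x)) x = x.
Proof.
  intro Hp. pick_rep x tx Hx. destruct (composable_units p x Hp) as [C1 _].
  pose proof (represents_idn (dim x) (represents_tgtn p Hx)) as Hi.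
  apply (represents_eq (represents_comp Hx Hi C1) Hx).
  rewrite (represents_dim Hx) in *. now apply a_unitl.
Qed.

Lemma free_unit_r p (x : FreeG) : p < dim x -> comp p x (idn (dim x) (srcn p x)) = x.
Proof.
  intro Hp. pick_rep x tx Hx. destruct (composable_units p x Hp) as [_ C1].
  pose proof (represents_idn (dim x) (represents_srcn p Hx)) as Hi.
  apply (represents_eq (represents_comp Hi Hx C1) Hx).
  rewrite (represents_dim Hx) in *. now apply a_unitr.
Qed.

Lemma free_id_comp p (x y : FreeG) : composable p x y ->
  idc (comp p y x) = comp p (idc y) (idc x).
Proof.
  intro Cxy. pick_rep x tx Hx. pick_rep y ty Hy.
  pose proof (composable_idc _ _ _ Cxy) as C1.
  apply (represents_eq (represents_idc (represents_comp Hx Hy Cxy))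
    (represents_comp (represents_idc Hx) (represents_idc Hy) C1)).
  destruct (proj1 (composable_represents p Hx Hy) Cxy) as [A1 [A2 A3]].
  now apply a_idcomp.
Qed.

Lemma free_interchange p q (x y x' y' : FreeG) : q < p ->
  composable p x y -> composable p x' y' -> composable q x x' -> composable q y y' ->
  comp q (comp p y' x') (comp p y x) = comp p (comp q y' y) (comp q x' x).
Proof.
  intros Hqp C1 C2 C3 C4.
  pick_rep x tx Hx. pick_rep y ty Hy. pick_rep x' tx' Hx'. pick_rep y' ty' Hy'.
  destruct (composable_interchange _ _ _ _ _ _ Hqp C1 C2 C3 C4) as [D1 D2].
  apply (represents_eq
    (represents_comp (represents_comp Hx Hy C1) (represents_comp Hx' Hy' C2) D1)
    (represents_comp (represents_comp Hx Hx' C3) (represents_comp Hy Hy' C4) D2)).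
  destruct (proj1 (composable_represents p Hx Hy) C1) as [A1 [A2 A3]].
  destruct (proj1 (composable_represents p Hx' Hy') C2) as [B1 [B2 B3]].
  destruct (proj1 (composable_represents q Hx Hx') C3) as [F1 [F2 F3]].
  destruct (proj1 (composable_represents q Hy Hy') C4) as [G1 [G2 G3]].
  now apply a_inter.
Qed.

Lemma FreeG_omega : is_omega_cat FreeG.
Proof.
  constructor; try solve [intros; apply FreeG_well_sorted; auto].
  - exact free_assoc.
  - exact free_unit_l.
  - exact free_unit_r.
  - exact free_id_comp.
  - exact free_interchange.
Qed.

Lemma represents_simulation :
  simulation (GS := Terms C) (@txi C) xiF (@represents C)
    (fun p _ _ (u v : FreeG) => composable p u v).
Proof.
  constructor.
  - intros a u H. now rewrite (represents_dim H).
  - exact (@represents_src C).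
  - exact (@represents_tgt C).
  - exact (@represents_idc C).
  - exact (@represents_xi C).
  - intros p a b u v Ha Hb Hc. now apply represents_comp.
Qed.

Lemma free_xi_dim (x : FreeG) : dim (xiF x) = S (dim x).
Proof.
  pick_rep x t Ht. now rewrite (represents_dim (represents_xi Ht)), (represents_dim Ht).
Qed.

Lemma free_xi_st0 (x : FreeG) : dim x = 0 -> src (xiF x) = oF /\ tgt (xiF x) = x.
Proof.
  intro Hd. pick_rep x t Ht. rewrite (represents_dim Ht) in Hd. split.
  - apply (represents_eq (represents_src (represents_xi Ht)) (represents_orig C)).
    now apply x_st0s.
  - apply (represents_eq (represents_tgt (represents_xi Ht)) Ht). now apply x_st0t.
Qed.

(* By induction on dimension: the chain in the target of [xiF z] is built
   from [xiF] on cells of lower dimension only. *)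
Lemma free_xi_stS n (z : FreeG) : dim z = n -> 0 < n ->
  src (xiF z) = xiF (tgt z) /\ tgt (xiF z) = chain xiF z z (dim z).
Proof.
  revert z. induction n as [n IH] using lt_wf_ind. intros z Hz Hn. pick_rep z t Ht.
  split.
  - apply (represents_eq (represents_src (represents_xi Ht)) (represents_xi (represents_tgt Ht))).
    apply x_stSs. rewrite <- (represents_dim Ht); lia.
  - destruct (chain_spec oF xiF n free_xi_dim free_xi_st0
       (fun w Hw1 Hw2 => IH (dim w) Hw2 w eq_refl Hw1) n (le_n n) z z ltac:(lia) ltac:(lia)
       ltac:(auto)) as [_ [OK _]].
    assert (Hch : represents (@chain (Terms C) (@txi C) t t n) (chain xiF z z n)).
    { apply (sim_chain represents_simulation); auto. }
    rewrite Hz. apply (represents_eq (represents_tgt (represents_xi Ht)) Hch).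
    rewrite (represents_dim Ht) in Hz. rewrite <- Hz. apply x_stSt. lia.
Qed.

Lemma free_xi_comp p (x y : FreeG) : composable p x y ->
  xiF (comp p y x) = pcomp (S p) (pcomp p (chain xiF (tgtn (S p) y) x p) (xiF x)) (xiF y).
Proof.
  intro Hc. pick_rep x tx Hx. pick_rep y ty Hy.
  destruct (@expansion_rhs_defined FreeG _ (oF) xiF (S (dim x)) free_xi_dim free_xi_st0
    (fun z Hz _ => free_xi_stS z eq_refl Hz) p x y Hc ltac:(lia)) as [O1 [O2 O3]].
  pose proof (sim_expansion_rhs represents_simulation Hx Hy O1 O2 O3) as Hr.
  apply (represents_eq (represents_xi (represents_comp Hx Hy Hc)) Hr).
  destruct (proj1 (composable_represents p Hx Hy) Hc) as [A1 [A2 A3]].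
  now apply x_comp.
Qed.

Lemma FreeG_expansion : is_expansion (G := FreeG) (oF) xiF.
Proof.
  constructor.
  - apply (represents_dim (represents_orig C)).
  - exact free_xi_dim.
  - exact free_xi_st0.
  - intros z Hz. now apply (free_xi_stS z eq_refl).
  - exact free_xi_comp.
  - intro u; pick_rep u t Ht.
    apply (represents_eq (represents_xi (represents_idc Ht)) (represents_idc (represents_xi Ht))).
    apply x_id.
  - intro u; pick_rep u t Ht.
    apply (represents_eq (represents_xi (represents_xi Ht)) (represents_idc (represents_xi Ht))).
    apply x_xi.
  - apply (represents_eq (represents_xi (represents_orig C)) (represents_idc (represents_orig C))).
    apply x_o.
Qed.

End FreeAxioms.

Definition FreeOmega (C : OmegaCat) : OmegaCat := {| ocdata := FreeG C; ocax := FreeG_omega C |}.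

Definition FreeExp (C : OmegaCat) : ExpCat :=
  {| ecat := FreeOmega C; origin := forig C; xi := @fxi C; expax := FreeG_expansion C |}.

(** * Evaluation and the universal property *)

Definition comp_or_junk {G : GlobData} p (y x : G) : G :=
  if excluded_middle_informative (composable p x y) then comp p y x else x.

Lemma comp_or_junk_eq {G : GlobData} {p} {x y : G} : composable p x y -> comp_or_junk p y x = comp p y x.
Proof. intro Hc. unfold comp_or_junk. destruct (excluded_middle_informative _); tauto. Qed.

Section Eval.
Variables (C : OmegaCat) (D : ExpCat) (f : ofun C D).

Notation tsrcn := (@srcn (Terms C)).
Notation ttgtn := (@tgtn (Terms C)).
Notation tidn := (@idn (Terms C)).

Fixpoint eval (t : term C) : D :=
  match t with
  | gen c => f c
  | orig _ => origin D
  | txi t => xi D (eval t)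
  | tsrc t => src (eval t)
  | ttgt t => tgt (eval t)
  | tid t => idc (eval t)
  | tcomp p y x => comp_or_junk p (eval y) (eval x)
  end.

Lemma eval_dim t : dim (eval t) = tdim t.
Proof.
  induction t; simpl.
  - apply ofun_dim.
  - apply (ex_dim_o (expax D)).
  - now rewrite (ex_dim (expax D)), IHt.
  - now rewrite ws_dim_src, IHt.
  - now rewrite ws_dim_tgt, IHt.
  - now rewrite ws_dim_id, IHt.
  - unfold comp_or_junk. destruct (excluded_middle_informative _); auto. now rewrite ws_dim_comp.
Qed.

Lemma eval_comp {p x y} : composable p (eval x) (eval y) ->
  eval (tcomp p y x) = comp p (eval y) (eval x).
Proof. apply comp_or_junk_eq. Qed.

Lemma eval_simulation : simulation (GS := Terms C) (@txi C) (xi D)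
  (fun t d => eval t = d) (fun p _ _ (u v : D) => composable p u v).
Proof.
  constructor; intros; subst; auto.
  - symmetry; apply eval_dim.
  - now apply eval_comp.
Qed.

Lemma eval_srcn i t : eval (tsrcn i t) = srcn i (eval t).
Proof. now apply (sim_srcn eval_simulation). Qed.
Lemma eval_tgtn i t : eval (ttgtn i t) = tgtn i (eval t).
Proof. now apply (sim_tgtn eval_simulation). Qed.
Lemma eval_idn n t : eval (tidn n t) = idn n (eval t).
Proof. now apply (sim_idn eval_simulation). Qed.

Lemma eval_composable {p x y} : p < tdim x -> tdim y = tdim x ->
  eval (ttgtn p x) = eval (tsrcn p y) -> composable p (eval x) (eval y).
Proof.
  intros A B E. rewrite eval_tgtn, eval_srcn in E. repeat split; rewrite ?eval_dim; auto.
Qed.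

Lemma eval_chain b x k : k <= tdim b -> k <= tdim x ->
  (forall i, i < k -> srcn i (eval b) = srcn i (eval x)) ->
  eval (@chain (Terms C) (@txi C) b x k) = chain (xi D) (eval b) (eval x) k.
Proof.
  intros Hb Hx Hbx.
  apply (sim_chain eval_simulation); auto.
  apply (expansion_chain_pcomposable _ _ (expax D)); rewrite ?eval_dim; auto.
Qed.

Lemma eval_assoc p x y z : composable p (eval x) (eval y) -> composable p (eval y) (eval z) ->
  eval (tcomp p (tcomp p z y) x) = eval (tcomp p z (tcomp p y x)).
Proof.
  intros C1 C2. destruct (composable_assoc _ _ _ _ C1 C2) as [D1 D2].
  rewrite (@eval_comp p x (tcomp p z y)), (@eval_comp p (tcomp p y x) z)
    by now rewrite eval_comp.
  rewrite (eval_comp C1), (eval_comp C2). now apply (oc_assoc (ocax D)).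
Qed.

Lemma eval_unit_l p x : p < tdim x -> eval (tcomp p (tidn (tdim x) (ttgtn p x)) x) = eval x.
Proof.
  intro Hp. rewrite <- eval_dim in Hp.
  rewrite eval_comp, eval_idn, eval_tgtn, <- eval_dim by
    (rewrite eval_idn, eval_tgtn, <- eval_dim; apply (composable_units p _ Hp)).
  now apply (oc_unit_l (ocax D)).
Qed.

Lemma eval_unit_r p x : p < tdim x -> eval (tcomp p x (tidn (tdim x) (tsrcn p x))) = eval x.
Proof.
  intro Hp. rewrite <- eval_dim in Hp.
  rewrite eval_comp, eval_idn, eval_srcn, <- eval_dim by
    (rewrite eval_idn, eval_srcn, <- eval_dim; apply (composable_units p _ Hp)).
  now apply (oc_unit_r (ocax D)).
Qed.

Lemma eval_interchange p q x y x' y' : q < p ->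
  composable p (eval x) (eval y) -> composable p (eval x') (eval y') ->
  composable q (eval x) (eval x') -> composable q (eval y) (eval y') ->
  eval (tcomp q (tcomp p y' x') (tcomp p y x)) = eval (tcomp p (tcomp q y' y) (tcomp q x' x)).
Proof.
  intros Hqp C1 C2 C3 C4.
  destruct (composable_interchange _ _ _ _ _ _ Hqp C1 C2 C3 C4) as [D1 D2].
  rewrite (@eval_comp q (tcomp p y x) (tcomp p y' x')) by now rewrite !eval_comp.
  rewrite (@eval_comp p (tcomp q x' x) (tcomp q y' y)) by now rewrite !eval_comp.
  rewrite (eval_comp C1), (eval_comp C2), (eval_comp C3), (eval_comp C4).
  now apply (oc_interchange (ocax D)).
Qed.

Lemma eval_xi_comp p x y : composable p (eval x) (eval y) ->
  eval (txi (tcomp p y x)) =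
  eval (@pcomp (Terms C) (S p)
          (@pcomp (Terms C) p (@chain (Terms C) (@txi C) (ttgtn (S p) y) x p) (txi x)) (txi y)).
Proof.
  intro Hc. change (eval (txi (tcomp p y x))) with (xi D (eval (tcomp p y x))).
  rewrite (eval_comp Hc), (ex_comp (expax D)) by exact Hc.
  destruct (expansion_rhs_composable _ _ (expax D) _ _ _ Hc) as [O1 [O2 O3]].
  symmetry. now apply (sim_expansion_rhs eval_simulation).
Qed.

Lemma eval_eqv t u : eqv t u -> eval t = eval u.
Proof.
  induction 1; try (simpl; congruence); cbn [eval].
  - apply ofun_src.
  - apply ofun_tgt.
  - apply ofun_idc.
  - rewrite ofun_composite by auto. now rewrite comp_or_junk_eq by now apply ofun_composable.
  - now apply ws_st0; rewrite eval_dim.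
  - now apply ws_st0; rewrite eval_dim.
  - now apply ws_glob; rewrite eval_dim.
  - now apply ws_glob; rewrite eval_dim.
  - apply ws_st_id.
  - apply ws_st_id.
  - rewrite comp_or_junk_eq by now apply eval_composable.
    now apply ws_st_comp_top; [apply eval_composable|rewrite eval_dim].
  - rewrite comp_or_junk_eq by now apply eval_composable.
    now apply ws_st_comp_top; [apply eval_composable|rewrite eval_dim].
  - pose proof (eval_composable H H0 IHeqv) as Hc.
    rewrite (comp_or_junk_eq Hc), comp_or_junk_eq by (apply composable_src; rewrite ?eval_dim; auto).
    now apply ws_st_comp_low; rewrite ?eval_dim.
  - pose proof (eval_composable H H0 IHeqv) as Hc.
    rewrite (comp_or_junk_eq Hc), comp_or_junk_eq by (apply composable_tgt; rewrite ?eval_dim; auto).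
    now apply ws_st_comp_low; rewrite ?eval_dim.
  - now apply eval_assoc; apply eval_composable.
  - now apply eval_unit_l.
  - now apply eval_unit_r.
  - pose proof (eval_composable H H0 IHeqv) as Hc.
    rewrite (comp_or_junk_eq Hc), comp_or_junk_eq by now apply composable_idc.
    now apply (oc_id_comp (ocax D)).
  - now apply eval_interchange; try apply eval_composable.
  - now apply (ex_st0 (expax D)); rewrite eval_dim.
  - now apply (ex_st0 (expax D)); rewrite eval_dim.
  - now apply (ex_stS (expax D)); rewrite eval_dim.
  - rewrite eval_chain, <- eval_dim by (auto; lia).
    now apply (ex_stS (expax D)); rewrite eval_dim.
  - now apply eval_xi_comp, eval_composable.
  - apply (ex_id (expax D)).
  - apply (ex_xi (expax D)).
  - apply (ex_o (expax D)).
Qed.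

End Eval.

Section Unit.
Variable C : OmegaCat.
Notation tsrcn := (@srcn (Terms C)).
Notation ttgtn := (@tgtn (Terms C)).

Lemma gen_iter (s : C -> C) (ts : term C -> term C) :
  (forall t u, eqv t u -> eqv (ts t) (ts u)) -> (forall c, eqv (gen (s c)) (ts (gen c))) ->
  forall k c, eqv (gen (Nat.iter k s c)) (Nat.iter k ts (gen c)).
Proof.
  intros Hts Hs k c. induction k; simpl; [apply e_refl|].
  eapply e_trans; [apply Hs|]. now apply Hts.
Qed.

Lemma gen_srcn i (c : C) : eqv (gen (srcn i c)) (tsrcn i (gen c)).
Proof. apply gen_iter; [apply e_src|apply g_src]. Qed.
Lemma gen_tgtn i (c : C) : eqv (gen (tgtn i c)) (ttgtn i (gen c)).
Proof. apply gen_iter; [apply e_tgt|apply g_tgt]. Qed.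

Definition unit_fn (c : C) : FreeOmega C := cls (w_gen c).

Lemma represents_unit c : represents (gen c) (unit_fn c).
Proof. apply represents_cls. Qed.

Lemma unit_is_functor : is_omega_functor unit_fn.
Proof.
  repeat split.
  - intro c. apply (represents_dim (represents_unit c)).
  - intro c. apply (represents_eq (represents_unit _) (represents_src (represents_unit c))).
    apply g_src.
  - intro c. apply (represents_eq (represents_unit _) (represents_tgt (represents_unit c))).
    apply g_tgt.
  - intro c. apply (represents_eq (represents_unit _) (represents_idc (represents_unit c))).
    apply g_id.
  - intros p x y Hc. pose proof Hc as [A [B E]].
    assert (Hq : composable (G := FreeG C) p (unit_fn x) (unit_fn y)).
    { apply (composable_represents p (represents_unit x) (represents_unit y)).
      repeat split; auto.
      eapply e_trans; [apply e_sym, gen_tgtn|]. rewrite E. apply gen_srcn. }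
    apply (represents_eq (represents_unit _) (represents_comp (represents_unit x)
      (represents_unit y) Hq)).
    now apply g_comp.
Qed.

Definition unit_map : ofun C (FreeOmega C) := {| ofn := unit_fn; ofn_ax := unit_is_functor |}.

End Unit.

Section Extension.
Variables (C : OmegaCat) (D : ExpCat) (f : ofun C D).

Definition extension_fn (q : FreeOmega C) : D := eval D f (rep q).

Lemma extension_represents t q : represents t q -> extension_fn q = eval D f t.
Proof. intro H. apply eval_eqv, (represents_eqv (represents_rep q) H). Qed.

Lemma extension_is_functor : is_omega_functor extension_fn.
Proof.
  repeat split.
  - intro q. destruct (represented q) as [t Ht].
    rewrite (extension_represents Ht), eval_dim. symmetry; apply (represents_dim Ht).
  - intro q. destruct (represented q) as [t Ht].
    rewrite (extension_represents Ht). apply (extension_represents (represents_src Ht)).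
  - intro q. destruct (represented q) as [t Ht].
    rewrite (extension_represents Ht). apply (extension_represents (represents_tgt Ht)).
  - intro q. destruct (represented q) as [t Ht].
    rewrite (extension_represents Ht). apply (extension_represents (represents_idc Ht)).
  - intros p x y Hc. destruct (represented x) as [tx Hx]. destruct (represented y) as [ty Hy].
    transitivity (eval D f (tcomp p ty tx)).
    { apply extension_represents, (represents_comp Hx Hy Hc). }
    rewrite (extension_represents Hx), (extension_represents Hy).
    destruct (proj1 (composable_represents p Hx Hy) Hc) as [A [B E]].
    apply eval_comp, eval_composable; auto. now apply eval_eqv.
Qed.

Definition extension_omap : ofun (FreeOmega C) D :=
  {| ofn := extension_fn; ofn_ax := extension_is_functor |}.

Lemma extension_origin : extension_omap (origin (FreeExp C)) = origin D.
Proof. apply (extension_represents (represents_orig C)). Qed.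

Lemma extension_xi x : extension_omap (xi (FreeExp C) x) = xi D (extension_omap x).
Proof.
  destruct (represented x) as [t Ht]. simpl.
  rewrite (extension_represents Ht). apply (extension_represents (represents_xi Ht)).
Qed.

Definition extension : efun (FreeExp C) D :=
  @Build_efun (FreeExp C) D extension_omap extension_origin extension_xi.

Lemma extension_unit c : extension (unit_map C c) = f c.
Proof. apply (extension_represents (represents_unit C c)). Qed.

Lemma extension_unique (g : efun (FreeExp C) D) :
  (forall c, g (unit_map C c) = f c) -> forall q, g q = extension q.
Proof.
  intros Hg q. destruct (represented q) as [t Ht].
  transitivity (eval D f t); [|symmetry; apply (extension_represents Ht)].
  pose proof (represents_wf Ht) as W. revert q Ht. induction W; intros q Ht.
  - rewrite <- (represents_eq (represents_unit C c) Ht (e_refl _)). apply Hg.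
  - rewrite <- (represents_eq (represents_orig C) Ht (e_refl _)). apply (efn_o g).
  - rewrite <- (represents_eq (represents_xi (represents_cls W)) Ht (e_refl _)).
    change (g (xi (FreeExp C) (cls W)) = xi D (eval D f t)).
    rewrite (efn_xi g). f_equal; apply IHW, represents_cls.
  - rewrite <- (represents_eq (represents_src (represents_cls W)) Ht (e_refl _)).
    etransitivity; [exact (ofun_src (efn g) (cls W))|]. simpl. f_equal; apply IHW, represents_cls.
  - rewrite <- (represents_eq (represents_tgt (represents_cls W)) Ht (e_refl _)).
    etransitivity; [exact (ofun_tgt (efn g) (cls W))|]. simpl. f_equal; apply IHW, represents_cls.
  - rewrite <- (represents_eq (represents_idc (represents_cls W)) Ht (e_refl _)).
    etransitivity; [exact (ofun_idc (efn g) (cls W))|]. simpl. f_equal; apply IHW, represents_cls.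
  - assert (Hc : composable (G := FreeG C) p (cls W1) (cls W2))
      by now apply (composable_represents p (represents_cls W1) (represents_cls W2)).
    rewrite <- (represents_eq (represents_comp (represents_cls W1) (represents_cls W2) Hc)
      Ht (e_refl _)).
    pose proof (ofun_composable (efn g) _ _ _ Hc) as Hc2.
    rewrite (IHW1 _ (represents_cls W1)), (IHW2 _ (represents_cls W2)) in Hc2.
    simpl. rewrite (comp_or_junk_eq Hc2), <- (IHW1 _ (represents_cls W1)),
      <- (IHW2 _ (represents_cls W2)).
    exact (ofun_composite (efn g) _ _ _ Hc).
Qed.

End Extension.

Lemma efun_free_ext (C : OmegaCat) (D : ExpCat) (g1 g2 : efun (FreeExp C) D) :
  (forall c, g1 (unit_map C c) = g2 (unit_map C c)) -> g1 = g2.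
Proof.
  intro H. apply efun_eq, ofun_eq. intro q.
  pose (f := ofun_comp (efn g2) (unit_map C) : ofun C D).
  rewrite (extension_unique f g1 H q). symmetry.
  apply (extension_unique f g2 (fun c => eq_refl) q).
Qed.

(** * Monadicity *)

Definition free_map {a b : OmegaCat} (g : ofun a b) : efun (FreeExp a) (FreeExp b) :=
  extension (FreeExp b) (ofun_comp (unit_map b) g).

Lemma free_map_unit a b (g : ofun a b) c : free_map g (unit_map a c) = unit_map b (g c).
Proof. apply (extension_unit (FreeExp b) (ofun_comp (unit_map b) g)). Qed.

Definition counit (d : ExpCat) : efun (FreeExp d) d := extension d (ofun_id d).

Lemma counit_unit (d : ExpCat) x : counit d (unit_map d x) = x.
Proof. apply (extension_unit d (ofun_id d)). Qed.

Definition FreeFunctor : Functor OmegaCatC ExpC.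
Proof.
  refine {| fobj := (FreeExp : OmegaCatC -> ExpC);
            fmap := fun a b (g : @hom OmegaCatC a b) => (free_map g : @hom ExpC _ _) |}.
  - intro a. apply efun_free_ext. intro c. apply free_map_unit.
  - intros a b c f g. apply efun_free_ext. intro x.
    change (free_map (ofun_comp g f) (unit_map a x) = free_map g (free_map f (unit_map a x))).
    now rewrite !free_map_unit.
Defined.

Definition free_adjunction : Adjunction ForgetExp FreeFunctor.
Proof.
  refine (@Build_Adjunction OmegaCatC ExpC ForgetExp FreeFunctor
    (fun c => unit_map c) (fun d => counit d) _ _ _ _).
  - intros c c' g. apply ofun_eq. intro x. apply free_map_unit.
  - intros d d' h. apply efun_free_ext. intro x.
    change (h (counit d (unit_map d x)) = counit d' (free_map h (unit_map d x))).
    now rewrite free_map_unit, !counit_unit.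
  - intro c. apply efun_free_ext. intro x.
    change (counit (FreeExp c) (free_map (unit_map c) (unit_map c x)) = unit_map c x).
    now rewrite free_map_unit, counit_unit.
  - intro d. apply ofun_eq. intro x. apply counit_unit.
Defined.

(* [a_unit] and [a_fxi] are the unit and multiplication laws of an
   Eilenberg-Moore algebra, the latter evaluated at [fxi q]. *)
Section AlgebraExpansion.
Variables (A : OmegaCat) (a : ofun (FreeOmega A) A).
Hypothesis a_unit : forall x, a (unit_map A x) = x.
Hypothesis a_fxi : forall q, a (fxi q) = a (fxi (unit_map A (a q))).

Definition alg_origin : A := a (forig A).
Definition alg_xi (x : A) : A := a (fxi (unit_map A x)).

Notation xiF := (@fxi A : FreeOmega A -> FreeOmega A).

Lemma alg_simulation : simulation xiF alg_xi (fun q u => a q = u)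
  (fun p (q1 q2 : FreeOmega A) _ _ => composable p q1 q2).
Proof.
  constructor; intros; subst.
  - symmetry; apply ofun_dim.
  - apply ofun_src.
  - apply ofun_tgt.
  - apply ofun_idc.
  - apply a_fxi.
  - now apply ofun_composite.
Qed.

Lemma unit_dim x : dim (unit_map A x) = dim x.
Proof. apply (ofun_dim (unit_map A)). Qed.

Lemma alg_xi_dim x : dim (alg_xi x) = S (dim x).
Proof. unfold alg_xi. now rewrite ofun_dim, (ex_dim (FreeG_expansion A)), unit_dim. Qed.

Lemma alg_xi_st0 x : dim x = 0 -> src (alg_xi x) = alg_origin /\ tgt (alg_xi x) = x.
Proof.
  intro Hx0. unfold alg_xi, alg_origin.
  destruct (ex_st0 (FreeG_expansion A) (x := unit_map A x)) as [E1 E2]; [now rewrite unit_dim|].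
  rewrite <- ofun_src, <- ofun_tgt. split; [exact (f_equal a E1)|].
  rewrite <- a_unit. exact (f_equal a E2).
Qed.

Lemma alg_xi_stS x : 0 < dim x ->
  src (alg_xi x) = alg_xi (tgt x) /\ tgt (alg_xi x) = chain alg_xi x x (dim x).
Proof.
  intro Hx0.
  destruct (ex_stS (FreeG_expansion A) (x := unit_map A x)) as [E1 E2]; [now rewrite unit_dim|].
  split.
  - unfold alg_xi at 1. rewrite <- ofun_src.
    transitivity (a (fxi (tgt (unit_map A x)))); [exact (f_equal a E1)|].
    now rewrite a_fxi, ofun_tgt, a_unit.
  - unfold alg_xi at 1. rewrite <- ofun_tgt.
    transitivity (a (chain xiF (unit_map A x) (unit_map A x) (dim x)));
      [rewrite <- unit_dim; exact (f_equal a E2)|].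
    apply (sim_chain alg_simulation (a_unit x) (a_unit x)).
    apply (expansion_chain_pcomposable _ _ (FreeG_expansion A)); rewrite ?unit_dim; auto.
Qed.

Lemma alg_xi_comp p x y : composable p x y ->
  alg_xi (comp p y x) = pcomp (S p) (pcomp p (chain alg_xi (tgtn (S p) y) x p) (alg_xi x)) (alg_xi y).
Proof.
  intro Hc. unfold alg_xi at 1.
  pose proof (ofun_composable (unit_map A) _ _ _ Hc) as Hc'.
  rewrite (ofun_composite (unit_map A)) by exact Hc.
  rewrite (ex_comp (FreeG_expansion A)) by exact Hc'.
  destruct (expansion_rhs_composable _ _ (FreeG_expansion A) _ _ _ Hc') as [O1 [O2 O3]].
  exact (sim_expansion_rhs alg_simulation (a_unit x) (a_unit y) O1 O2 O3).
Qed.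

Lemma alg_expansion : is_expansion alg_origin alg_xi.
Proof.
  constructor.
  - unfold alg_origin. rewrite ofun_dim. apply (ex_dim_o (FreeG_expansion A)).
  - exact alg_xi_dim.
  - exact alg_xi_st0.
  - exact alg_xi_stS.
  - exact alg_xi_comp.
  - intro u. unfold alg_xi.
    rewrite ofun_idc, (ex_id (FreeG_expansion A)). exact (ofun_idc a _).
  - intro u. unfold alg_xi. rewrite <- a_fxi, (ex_xi (FreeG_expansion A)). exact (ofun_idc a _).
  - unfold alg_xi, alg_origin. rewrite <- a_fxi, (ex_o (FreeG_expansion A)). exact (ofun_idc a _).
Qed.

End AlgebraExpansion.

Lemma counit_origin (d : ExpCat) : counit d (origin (FreeExp d)) = origin d.
Proof. apply (efn_o (counit d)). Qed.

Lemma counit_xi_unit (d : ExpCat) x : counit d (xi (FreeExp d) (unit_map d x)) = xi d x.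
Proof. rewrite (efn_xi (counit d)). f_equal. apply counit_unit. Qed.

Lemma forget_faithful (d d' : ExpC) (f g : hom d d') :
  fmap ForgetExp f = fmap ForgetExp g -> f = g.
Proof. apply efun_eq. Qed.

Lemma forget_full_on_algebras (d d' : ExpC) (g : hom (fobj ForgetExp d) (fobj ForgetExp d')) :
  is_alg_hom (fmap ForgetExp (adj_counit free_adjunction d))
    (fmap ForgetExp (adj_counit free_adjunction d')) g ->
  exists f : hom d d', fmap ForgetExp f = g.
Proof.
  intro Hg.
  assert (P : forall q, counit d' (free_map g q) = g (counit d q))
    by exact (fun q => f_equal (fun h : ofun (FreeExp d) d' => ofn h q) Hg).
  assert (Ho : g (origin d) = origin d').
  { rewrite <- counit_origin, <- P, <- (counit_origin d').
    f_equal. apply (efn_o (free_map g)). }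
  assert (Hxi : forall x, g (xi d x) = xi d' (g x)).
  { intro x. rewrite <- counit_xi_unit, <- P, <- (counit_xi_unit d').
    f_equal. rewrite (efn_xi (free_map g)). f_equal. apply free_map_unit. }
  now exists (@Build_efun d d' g Ho Hxi).
Qed.

Section Algebras.
Variables (A : OmegaCatC) (a : hom (fobj ForgetExp (fobj FreeFunctor A)) A).
Hypothesis Ha : is_algebra free_adjunction a.

Lemma algebra_unit x : a (unit_map A x) = x.
Proof. exact (f_equal (fun h : ofun A A => ofn h x) (proj1 Ha)). Qed.

Lemma algebra_fxi q : a (fxi q) = a (fxi (unit_map A (a q))).
Proof.
  pose proof (f_equal (fun h : ofun (FreeExp (FreeOmega A)) A =>
    ofn h (xi (FreeExp (FreeOmega A)) (unit_map (FreeOmega A) q))) (proj2 Ha)) as E.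
  change (a (free_map a (xi (FreeExp (FreeOmega A)) (unit_map (FreeOmega A) q))) =
          a (counit (FreeExp A) (xi (FreeExp (FreeOmega A)) (unit_map (FreeOmega A) q)))) in E.
  rewrite (efn_xi (free_map a)), (efn_xi (counit (FreeExp A))), free_map_unit,
    (counit_unit (FreeExp A)) in E.
  now symmetry.
Qed.

Definition algebra_exp : ExpCat :=
  {| ecat := A; origin := alg_origin a; xi := alg_xi a;
     expax := alg_expansion a algebra_unit algebra_fxi |}.

Definition algebra_efun : efun (FreeExp A) algebra_exp :=
  @Build_efun (FreeExp A) algebra_exp a eq_refl algebra_fxi.

Lemma algebra_counit : fmap ForgetExp (adj_counit free_adjunction algebra_exp) = a.
Proof.
  assert (E : counit algebra_exp = algebra_efun).
  { apply efun_free_ext. intro x.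
    change (counit algebra_exp (unit_map A x) = a (unit_map A x)).
    now rewrite counit_unit, algebra_unit. }
  exact (f_equal (fun e : efun (FreeExp A) algebra_exp => efn e) E).
Qed.

End Algebras.

Lemma algebras_essentially_free (A : OmegaCatC)
    (a : hom (fobj ForgetExp (fobj FreeFunctor A)) A) :
  is_algebra free_adjunction a ->
  exists (d : ExpC) (h : hom (fobj ForgetExp d) A) (h' : hom A (fobj ForgetExp d)),
    cmp h h' = cid A /\ cmp h' h = cid (fobj ForgetExp d) /\
    is_alg_hom (fmap ForgetExp (adj_counit free_adjunction d)) a h /\
    is_alg_hom a (fmap ForgetExp (adj_counit free_adjunction d)) h'.
Proof.
  intro Ha. exists (algebra_exp Ha), (cid A), (cid A).
  unfold is_alg_hom. rewrite (algebra_counit Ha), (fmap_id FreeFunctor), (fmap_id ForgetExp).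
  rewrite !cmp_id_l, !cmp_id_r. repeat split.
  change (cmp a (fmap ForgetExp (fmap FreeFunctor (cid A))) = a).
  now rewrite (fmap_id FreeFunctor), (fmap_id ForgetExp), cmp_id_r.
Qed.

Theorem mainTheorem3 : monadic ForgetExp.
Proof.
  exists FreeFunctor, free_adjunction. split; [|split].
  - exact forget_faithful.
  - exact forget_full_on_algebras.
  - exact algebras_essentially_free.
Qed.
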